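(* For every term $t$ of the pair pattern calculus and all integers $b,e,m,s\ge 0$, the following are equivalent: (i) there is a tight derivation $\Phi\triangleright\Gamma\vdash^{(b,e,m,s)}t:\mathtt{t}$ in system $\mathscr{E}$ for some context $\Gamma$ and tight type $\mathtt{t}$; (ii) there exists a canonical form $u\in\mathcal{M}$ such that $t\to_h^{(b,e,m)}u$ (a head-reduction sequence with exactly $b$ steps of kind (b), $e$ of kind (e) and $m$ of kind (m)) and $|u|=s$.
   Context: Pair pattern calculus: patterns $p,q ::= x\mid\langle p,q\rangle$ (linear); $\mathrm{var}(p)$ = variables of $p$; $p\# q$ means disjoint variables. Terms $t,u ::= x\mid\lambda p.t\mid\langle t,u\rangle\mid t\,u\mid t[p/u]$, $\mathrm{var}(p)$ bound in $t$ in $\lambda p.t$ and $t[p/u]$; $\mathrm{fv}$ as usual; terms modulo $\alpha$. List contexts $L::=\Box\mid L[p/u]$, $L\langle t\rangle$ plugging (possibly capturing), $\mathrm{bv}(L)$ variables bound by $L$; $t\{x/u\}$ capture-avoiding substitution; $\mathrm{abs}(t)$ iff $t=L\langle\lambda p.u\rangle$. Head reduction ($t\not\to_h$: no $u$ with $t\to_h u$): (b) $L\langle\lambda p.t\rangle u\to_h L\langle t[p/u]\rangle$ if $\mathrm{bv}(L)\cap\mathrm{fv}(u)=\emptyset$; (m) $t[\langle p_1,p_2\rangle/L\langle\langle u_1,u_2\rangle\rangle]\to_h L\langle t[p_1/u_1][p_2/u_2]\rangle$ if $t\not\to_h$ and $\mathrm{bv}(L)\cap\mathrm{fv}(t)=\emptyset$;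 (e) $t[x/u]\to_h t\{x/u\}$ if $t\not\to_h$; closure: $\lambda p.t\to_h\lambda p.t'$ if $t\to_h t'$; $tu\to_h t'u$ if $t\to_h t'$ and not $\mathrm{abs}(t)$; $t[p/u]\to_h t'[p/u]$ if $t\to_h t'$; $t[p/u]\to_h t[p/u']$ if $t\not\to_h$, $p$ not a variable, $u\to_h u'$. The kind of a step is the base rule (b), (e) or (m) it uses. Canonical forms $\mathcal{M} ::= \lambda p.\mathcal{M}\mid\langle t,t\rangle\mid\mathcal{M}[\langle p_1,p_2\rangle/\mathcal{N}]\mid\mathcal{N}$, $\mathcal{N} ::= x\mid\mathcal{N}\,t\mid\mathcal{N}[\langle p_1,p_2\rangle/\mathcal{N}]$, with size $|x|=0$, $|\langle t,u\rangle|=1$, $|\mathcal{N}t|=|\mathcal{N}|+1$, $|\lambda p.\mathcal{M}|=|\mathcal{M}|+1$, $|\mathcal{M}[\langle p_1,p_2\rangle/\mathcal{N}]|=|\mathcal{M}|+|\mathcal{N}|+1$. System $\mathscr{E}$. Types: tight types $\mathtt{t} ::= \bullet_{\mathcal{N}}\mid\bullet_{\mathcal{M}}$; types $\sigma ::= \mathtt{t}\mid \mathcal{A}_1\times\mathcal{A}_2\mid \mathcal{A}\to\sigma$; multi-types $\mathcal{A} ::= [\sigma_k]_{k\in K}$ (finite, possibly empty). Contexts map variables to multi-types, $\mathrm{dom}(\Gamma)$ = variables with non-empty multi-type; $\wedge$ pointwise multiset union; $\Gamma|_p$ restriction to $\mathrm{var}(p)$; $\Gamma\setminus\mathrm{var}(p)$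 removal. $\mathrm{tight}(\sigma)$ iff $\sigma\in\{\bullet_{\mathcal{N}},\bullet_{\mathcal{M}}\}$, extended elementwise. Rules: (pat_v) $x:\mathcal{A}\Vdash^{(1,0,0)} x:\mathcal{A}$. (pat_×) from $\Gamma\Vdash^{(e_p,m_p,f_p)}p:\mathcal{A}$, $\Delta\Vdash^{(e_q,m_q,f_q)}q:\mathcal{B}$, $p\#q$ infer $\Gamma\wedge\Delta\Vdash^{(e_p+e_q,1+m_p+m_q,f_p+f_q)}\langle p,q\rangle:[\mathcal{A}\times\mathcal{B}]$. (pat_p) if $\mathrm{dom}(\Gamma)\subseteq\mathrm{var}(\langle p,q\rangle)$ and $\mathrm{tight}(\Gamma)$ then $\Gamma\Vdash^{(0,0,1)}\langle p,q\rangle:[\bullet_{\mathcal{N}}]$. (ax) $x:[\sigma]\vdash^{(0,0,0,0)}x:\sigma$. (abs) from $\Gamma\vdash^{(b,e,m,f)}t:\sigma$ and $\Gamma|_p\Vdash^{(e_p,m_p,f_p)}p:\mathcal{A}$ infer $\Gamma\setminus\mathrm{var}(p)\vdash^{(b+1,e+e_p,m+m_p,f+f_p)}\lambda p.t:\mathcal{A}\to\sigma$. (abs_p) from $\Gamma\vdash^{(b,e,m,f)}t:\mathtt{t}$ ($\mathtt{t}$ tight) and $\mathrm{tight}(\Gamma|_p)$ infer $\Gamma\setminus\mathrm{var}(p)\vdash^{(b,e,m,f+1)}\lambda p.t:\bullet_{\mathcal{M}}$. (many) from $(\Gamma_k\vdash^{(b_k,e_k,m_k,f_k)}t:\sigma_k)_{k\in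 K}$ infer $\wedge_k\Gamma_k\vdash^{(\sum b_k,\sum e_k,\sum m_k,\sum f_k)}t:[\sigma_k]_{k\in K}$. (app) from $\Gamma\vdash^{(b_t,e_t,m_t,f_t)}t:\mathcal{A}\to\sigma$, $\Delta\vdash^{(b_u,e_u,m_u,f_u)}u:\mathcal{A}$ infer $\Gamma\wedge\Delta\vdash^{(b_t+b_u,e_t+e_u,m_t+m_u,f_t+f_u)}t\,u:\sigma$. (app_p) from $\Gamma\vdash^{(b,e,m,f)}t:\bullet_{\mathcal{N}}$ infer $\Gamma\vdash^{(b,e,m,f+1)}t\,u:\bullet_{\mathcal{N}}$. (pair) from $\Gamma\vdash^{(b_t,e_t,m_t,f_t)}t:\mathcal{A}$, $\Delta\vdash^{(b_u,e_u,m_u,f_u)}u:\mathcal{B}$ infer $\Gamma\wedge\Delta\vdash^{(b_t+b_u,e_t+e_u,m_t+m_u,f_t+f_u)}\langle t,u\rangle:\mathcal{A}\times\mathcal{B}$. (pair_p) $\vdash^{(0,0,0,1)}\langle t,u\rangle:\bullet_{\mathcal{M}}$. (match) from $\Gamma\vdash^{(b_t,e_t,m_t,f_t)}t:\sigma$, $\Gamma|_p\Vdash^{(e_p,m_p,f_p)}p:\mathcal{A}$, $\Delta\vdash^{(b_u,e_u,m_u,f_u)}u:\mathcal{A}$ infer $(\Gamma\setminus\mathrm{var}(p))\wedge\Delta\vdash^{(b_t+b_u,e_t+e_u+e_p,m_t+m_u+m_p,f_t+f_u+f_p)}t[p/u]:\sigma$. A derivation is tight if its context and its type are tight. *)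

From Stdlib Require Import List Permutation Arith.
Import ListNotations.

(* Linear patterns up to renaming: a pattern is its shape; the variables of a
   pattern are its leaves, numbered left to right.  Linearity and disjointness
   p # q are automatic. *)
Inductive pat : Type :=
| PVar : pat
| PPair : pat -> pat -> pat.

Fixpoint psize (p : pat) : nat :=
  match p with
  | PVar => 1
  | PPair p q => psize p + psize q
  end.

(* In [Lam p t] and [Sub t p u] (= t[p/u]) the psize p variables of p are
   bound in t: index i < psize p denotes the i-th leaf of p (left to right);
   indices >= psize p denote outer variables (shifted by psize p). *)
Inductive term : Type :=
| Var  : nat -> term
| Lam  : pat -> term -> term
| Pair : term -> term -> term
| App  : term -> term -> term
| Sub  : term -> pat -> term -> term.

Fixpoint lift (d c : nat) (t : term) : term :=
  match t with
  | Var n => if Nat.ltb n c then Var n else Var (n + d)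
  | Lam p t1 => Lam p (lift d (c + psize p) t1)
  | Pair t1 t2 => Pair (lift d c t1) (lift d c t2)
  | App t1 t2 => App (lift d c t1) (lift d c t2)
  | Sub t1 p t2 => Sub (lift d (c + psize p) t1) p (lift d c t2)
  end.

(* capture-avoiding substitution of u for index k (and decrement of the
   indices above k): subst 0 u t is t{x/u} where x is the binder with index 0 *)
Fixpoint subst (k : nat) (u : term) (t : term) : term :=
  match t with
  | Var n => if Nat.ltb n k then Var n
             else if Nat.eqb n k then lift k 0 u else Var (n - 1)
  | Lam p t1 => Lam p (subst (k + psize p) u t1)
  | Pair t1 t2 => Pair (subst k u t1) (subst k u t2)
  | App t1 t2 => App (subst k u t1) (subst k u t2)
  | Sub t1 p t2 => Sub (subst (k + psize p) u t1) p (subst k u t2)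
  end.

Inductive lctx : Type :=
| Hole : lctx
| LSub : lctx -> pat -> term -> lctx.

(* possibly capturing plugging L<t> *)
Fixpoint plug (L : lctx) (t : term) : term :=
  match L with
  | Hole => t
  | LSub L' p u => Sub (plug L' t) p u
  end.

Fixpoint nbL (L : lctx) : nat :=
  match L with
  | Hole => 0
  | LSub L' p _ => nbL L' + psize p
  end.

Definition is_abs (t : term) : Prop :=
  exists L p u, t = plug L (Lam p u).

Inductive kind : Type := KB | KE | KM.

(* Defined by structural
   recursion on t, so that the negative premises "t does not reduce" (always
   on a strict subterm) are allowed.  The side conditions
   bv(L) # fv(u) / bv(L) # fv(t) of the named presentation become the index
   shifts below. *)
Fixpoint hstep (t : term) : kind -> term -> Prop :=
  match t with
  | Var _ => fun _ _ => False
  | Pair _ _ => fun _ _ => False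
  | Lam p t1 => fun k v =>
      exists t1', hstep t1 k t1' /\ v = Lam p t1'
  | App t1 u => fun k v =>
      (* (b)  L<lambda p.t0> u -> L<t0[p/u]> *)
      (k = KB /\ exists L p t0,
          t1 = plug L (Lam p t0) /\
          v = plug L (Sub t0 p (lift (nbL L) 0 u)))
      \/
      (~ is_abs t1 /\ exists t1', hstep t1 k t1' /\ v = App t1' u)
  | Sub t1 p u => fun k v =>
      (exists t1', hstep t1 k t1' /\ v = Sub t1' p u)
      \/
      ((forall k' w, ~ hstep t1 k' w) /\
       match p with
       | PVar =>
           k = KE /\ v = subst 0 u t1
       | PPair p1 p2 =>
           (* (m)  t[<p1,p2>/L<<u1,u2>>] -> L<t[p1/u1][p2/u2]>  if t does not reduce *)
           (k = KM /\ exists L u1 u2,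
               u = plug L (Pair u1 u2) /\
               v = plug L (Sub (Sub (lift (nbL L) (psize p1 + psize p2) t1)
                                    p1 (lift (psize p2) 0 u1))
                               p2 u2))
           \/
           (exists u', hstep u k u' /\ v = Sub t1 p u')
       end)
  end.

Definition isB (k : kind) : nat := match k with KB => 1 | _ => 0 end.
Definition isE (k : kind) : nat := match k with KE => 1 | _ => 0 end.
Definition isM (k : kind) : nat := match k with KM => 1 | _ => 0 end.

Inductive hreds : term -> nat -> nat -> nat -> term -> Prop :=
| hreds_refl t : hreds t 0 0 0 t
| hreds_step t k t' b e m u :
    hstep t k t' -> hreds t' b e m u ->
    hreds t (isB k + b) (isE k + e) (isM k + m) u.

(** * Canonical forms with their size: canM u s  iff  u in M and |u| = s *)
Inductive canM : term -> nat -> Prop :=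
| canM_lam p t n : canM t n -> canM (Lam p t) (n + 1)
| canM_pair t u : canM (Pair t u) 1
| canM_sub t p1 p2 u n k :
    canM t n -> canN u k -> canM (Sub t (PPair p1 p2) u) (n + k + 1)
| canM_N t n : canN t n -> canM t n
with canN : term -> nat -> Prop :=
| canN_var x : canN (Var x) 0
| canN_app t u n : canN t n -> canN (App t u) (n + 1)
| canN_sub t p1 p2 u n k :
    canN t n -> canN u k -> canN (Sub t (PPair p1 p2) u) (n + k + 1).

(** * Types.  Multi-types are finite multisets, represented by lists;
    type equality is taken up to permutation of multi-types, recursively. *)
Inductive ty : Type :=
| TN : ty
| TM : ty
| TProd : list ty -> list ty -> ty
| TArr : list ty -> ty -> ty.

Definition mty := list ty.

Inductive teq : ty -> ty -> Prop :=
| teq_N : teq TN TN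
| teq_M : teq TM TM
| teq_prod A1 A2 B1 B2 B1' B2' :
    Permutation B1 B1' -> Forall2 teq A1 B1' ->
    Permutation B2 B2' -> Forall2 teq A2 B2' ->
    teq (TProd A1 A2) (TProd B1 B2)
| teq_arr A B B' s s' :
    Permutation B B' -> Forall2 teq A B' -> teq s s' ->
    teq (TArr A s) (TArr B s').

Definition mteq (A B : mty) : Prop :=
  exists B', Permutation B B' /\ Forall2 teq A B'.

Definition tight (s : ty) : Prop := s = TN \/ s = TM.
Definition tight_m (A : mty) : Prop := Forall tight A.

(** Typing contexts: de Bruijn index -> multi-type ([] = not in domain) *)
Definition ctx := nat -> mty.
Definition cempty : ctx := fun _ => [].
Definition csingle (x : nat) (A : mty) : ctx :=
  fun y => if Nat.eqb y x then A else [].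
Definition cand (G D : ctx) : ctx := fun y => G y ++ D y.
(* G \ var(p) where p binds the n lowest indices *)
Definition cdrop (n : nat) (G : ctx) : ctx := fun y => G (y + n).
Definition tight_ctx (G : ctx) : Prop := forall x, tight_m (G x).

(* Pattern typing  G|_p ||-^{(e,m,f)} p : A, where the variables of p are the
   indices k, k+1, ..., k + psize p - 1 of G (the judgement only reads
   these entries, i.e. the restriction G|_p). *)
Inductive ptyp : ctx -> nat -> pat -> mty -> nat -> nat -> nat -> Prop :=
| pt_var G k : ptyp G k PVar (G k) 1 0 0
| pt_pair G k p q A B ep mp fp eq mq fq :
    ptyp G k p A ep mp fp ->
    ptyp G (k + psize p) q B eq mq fq ->
    ptyp G k (PPair p q) [TProd A B] (ep + eq) (1 + mp + mq) (fp + fq)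
| pt_p G k p q :
    (forall i, k <= i < k + psize (PPair p q) -> tight_m (G i)) ->
    ptyp G k (PPair p q) [TN] 0 0 1.

Inductive typ : ctx -> term -> ty -> nat -> nat -> nat -> nat -> Prop :=
| ty_ax x s : typ (csingle x [s]) (Var x) s 0 0 0 0
| ty_abs G p t s A b e m f ep mp fp :
    typ G t s b e m f ->
    ptyp G 0 p A ep mp fp ->
    typ (cdrop (psize p) G) (Lam p t) (TArr A s) (b + 1) (e + ep) (m + mp) (f + fp)
| ty_abs_p G p t s b e m f :
    typ G t s b e m f -> tight s ->
    (forall i, i < psize p -> tight_m (G i)) ->
    typ (cdrop (psize p) G) (Lam p t) TM b e m (f + 1)
| ty_app G D t u A B s bt et mt ft bu eu mu fu :
    typ G t (TArr A s) bt et mt ft ->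
    mtyp D u B bu eu mu fu -> mteq A B ->
    typ (cand G D) (App t u) s (bt + bu) (et + eu) (mt + mu) (ft + fu)
| ty_app_p G t u b e m f :
    typ G t TN b e m f -> typ G (App t u) TN b e m (f + 1)
| ty_pair G D t u A B bt et mt ft bu eu mu fu :
    mtyp G t A bt et mt ft -> mtyp D u B bu eu mu fu ->
    typ (cand G D) (Pair t u) (TProd A B) (bt + bu) (et + eu) (mt + mu) (ft + fu)
| ty_pair_p t u : typ cempty (Pair t u) TM 0 0 0 1
| ty_match G D t p u s A B bt et mt ft ep mp fp bu eu mu fu :
    typ G t s bt et mt ft ->
    ptyp G 0 p A ep mp fp ->
    mtyp D u B bu eu mu fu -> mteq A B ->
    typ (cand (cdrop (psize p) G) D) (Sub t p u) s
        (bt + bu) (et + eu + ep) (mt + mu + mp) (ft + fu + fp)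
with mtyp : ctx -> term -> mty -> nat -> nat -> nat -> nat -> Prop :=
| mt_nil t : mtyp cempty t [] 0 0 0 0
| mt_cons G D t s A b e m f b' e' m' f' :
    typ G t s b e m f -> mtyp D t A b' e' m' f' ->
    mtyp (cand G D) t (s :: A) (b + b') (e + e') (m + m') (f + f').

(* Tight typing is a quantitative invariant of head reduction. A head step of
   kind (b), (e) or (m) turns a derivation for [t] into one for the reduct in
   which exactly the counter b, e or m decreases by one (subject reduction;
   the (e) case is the substitution lemma), and every derivation of the reduct
   comes back from one of [t] (subject expansion, by anti-substitution). A
   tight derivation of an irreducible term has counters (0,0,0,s) and forces
   the term to be a canonical form of size s, and every canonical form of size
   s has such a derivation. So a tight derivation with counters (b,e,m,s) is
   followed by head reduction for exactly b+e+m steps into a canonical form of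
   size s, and such a reduction lifts back to a tight derivation. Multi-types
   being multisets, derivations are only transported up to permutation of
   multi-types, which preserves tightness. *)

From Stdlib Require Import List Permutation Arith Lia Classical FunctionalExtensionality.
Import ListNotations.

(** * Multiset equivalence of types *)

Fixpoint ty_nested_ind (P : ty -> Prop) (HN : P TN) (HM : P TM)
  (HP : forall A B, Forall P A -> Forall P B -> P (TProd A B))
  (HA : forall A s, Forall P A -> P s -> P (TArr A s)) (t : ty) : P t :=
  let fix all (l : list ty) : Forall P l :=
    match l with
    | [] => Forall_nil _
    | x :: r => Forall_cons _ (ty_nested_ind P HN HM HP HA x) (all r)
    end in
  match t with
  | TN => HN
  | TM => HM
  | TProd A B => HP A B (all A) (all B)
  | TArr A s => HA A s (all A) (ty_nested_ind P HN HM HP HA s)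
  end.

Section MultisetLifting.

Variable R : ty -> ty -> Prop.

(* [mteq] is [mrel teq]; the properties of [teq] are obtained by lifting them
   elementwise along the nested induction on types. *)
Definition mrel (A B : mty) : Prop := exists B', Permutation B B' /\ Forall2 R A B'.

Lemma mrel_refl_on A : Forall (fun a => R a a) A -> mrel A A.
Proof. intro HA; exists A; split; [reflexivity|]; induction HA; constructor; auto. Qed.

Lemma Forall2_sym_on A B :
  Forall (fun a => forall b, R a b -> R b a) A -> Forall2 R A B -> Forall2 R B A.
Proof. intros HA HAB; induction HAB; inversion HA; subst; constructor; auto. Qed.

Lemma Forall2_trans_on A B C :
  Forall (fun a => forall b c, R a b -> R b c -> R a c) A ->
  Forall2 R A B -> Forall2 R B C -> Forall2 R A C.
Proof.
  intros HA HAB; revert C; induction HAB; intros C HBC; inversion HBC; subst;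
    inversion HA; subst; constructor; eauto.
Qed.

Lemma mrel_sym_on A B :
  Forall (fun a => forall b, R a b -> R b a) A -> mrel A B -> mrel B A.
Proof.
  intros HA (B' & HBB' & HAB').
  destruct (Permutation_Forall2 (Permutation_sym HBB') (Forall2_sym_on _ _ HA HAB'))
    as (A' & HAA' & HBA').
  exists A'; auto.
Qed.

Lemma mrel_trans_on A B C :
  Forall (fun a => forall b c, R a b -> R b c -> R a c) A ->
  mrel A B -> mrel B C -> mrel A C.
Proof.
  intros HA (B' & HBB' & HAB') (C' & HCC' & HBC').
  destruct (Permutation_Forall2 HBB' HBC') as (C'' & HC'C'' & HB'C'').
  exists C''; split; [eapply Permutation_trans; eauto | eapply Forall2_trans_on; eauto].
Qed.

End MultisetLifting.

Lemma teq_prod_iff A1 A2 B1 B2 :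
  teq (TProd A1 A2) (TProd B1 B2) <-> mteq A1 B1 /\ mteq A2 B2.
Proof.
  split.
  - intro H; inversion H; subst; split; eexists; eauto.
  - intros [(B1' & ? & ?) (B2' & ? & ?)]; econstructor; eauto.
Qed.

Lemma teq_arr_iff A s B s' : teq (TArr A s) (TArr B s') <-> mteq A B /\ teq s s'.
Proof.
  split.
  - intro H; inversion H; subst; split; [eexists|]; eauto.
  - intros [(B' & ? & ?) ?]; econstructor; eauto.
Qed.

Lemma teq_prod_inv A1 A2 s : teq (TProd A1 A2) s -> exists B1 B2, s = TProd B1 B2.
Proof. intro H; inversion H; eauto. Qed.

Lemma teq_arr_inv A t s : teq (TArr A t) s -> exists B t', s = TArr B t'.
Proof. intro H; inversion H; eauto. Qed.

Lemma teq_refl s : teq s s.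
Proof.
  induction s using ty_nested_ind; try constructor.
  - apply teq_prod_iff; split; apply mrel_refl_on; auto.
  - apply teq_arr_iff; split; [apply mrel_refl_on|]; auto.
Qed.

Lemma teq_sym s t : teq s t -> teq t s.
Proof.
  revert t; induction s as [| | A B IHA IHB | A s IHA IHs] using ty_nested_ind;
    intros t Hst.
  - inversion Hst; constructor.
  - inversion Hst; constructor.
  - destruct (teq_prod_inv _ _ _ Hst) as (A' & B' & ->).
    apply teq_prod_iff in Hst as [HA HB].
    apply teq_prod_iff; split; apply mrel_sym_on; auto.
  - destruct (teq_arr_inv _ _ _ Hst) as (A' & s' & ->).
    apply teq_arr_iff in Hst as [HA Hs].
    apply teq_arr_iff; split; [apply mrel_sym_on|]; auto.
Qed.

Lemma teq_trans s t u : teq s t -> teq t u -> teq s u.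
Proof.
  revert t u; induction s as [| | A B IHA IHB | A s IHA IHs] using ty_nested_ind;
    intros t u Hst Htu.
  - inversion Hst; subst; auto.
  - inversion Hst; subst; auto.
  - destruct (teq_prod_inv _ _ _ Hst) as (A' & B' & ->).
    destruct (teq_prod_inv _ _ _ Htu) as (A'' & B'' & ->).
    apply teq_prod_iff in Hst as [HA HB], Htu as [HA' HB'].
    apply teq_prod_iff; split; eapply mrel_trans_on; eauto.
  - destruct (teq_arr_inv _ _ _ Hst) as (A' & s' & ->).
    destruct (teq_arr_inv _ _ _ Htu) as (A'' & s'' & ->).
    apply teq_arr_iff in Hst as [HA Hs], Htu as [HA' Hs'].
    apply teq_arr_iff; split; [eapply mrel_trans_on|]; eauto.
Qed.

Lemma mteq_refl A : mteq A A.
Proof. apply mrel_refl_on, Forall_forall; intros; apply teq_refl. Qed.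

Lemma mteq_sym A B : mteq A B -> mteq B A.
Proof. apply mrel_sym_on, Forall_forall; intros; apply teq_sym; auto. Qed.

Lemma mteq_trans A B C : mteq A B -> mteq B C -> mteq A C.
Proof. apply mrel_trans_on, Forall_forall; intros; eapply teq_trans; eauto. Qed.

Lemma mteq_perm A B : Permutation A B -> mteq A B.
Proof.
  intro HAB; destruct (mteq_refl A) as (A' & HAA' & HA).
  exists A'; split; [eapply Permutation_trans; [apply Permutation_sym|]|]; eauto.
Qed.

Lemma mteq_app A B A' B' : mteq A A' -> mteq B B' -> mteq (A ++ B) (A' ++ B').
Proof.
  intros (A'' & ? & ?) (B'' & ? & ?); exists (A'' ++ B'').
  split; [apply Permutation_app | apply Forall2_app]; auto.
Qed.

Lemma mteq_nil_l B : mteq [] B -> B = [].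
Proof.
  intros (B' & HB & HF); inversion HF; subst.
  apply Permutation_nil, Permutation_sym; auto.
Qed.

Lemma mteq_single_l a B : mteq [a] B -> exists b, B = [b] /\ teq a b.
Proof.
  intros (B' & HB & HF); inversion HF as [| ? b ? ? Hab HF']; subst; inversion HF'; subst.
  apply Permutation_sym, Permutation_length_1_inv in HB; eauto.
Qed.

Lemma mteq_single a b : teq a b -> mteq [a] [b].
Proof. exists [b]; auto. Qed.

Lemma teq_tight s t : teq s t -> tight s -> tight t.
Proof. intros H [-> | ->]; inversion H; [left | right]; auto. Qed.

Lemma teq_TN s : teq TN s -> s = TN.
Proof. intro H; inversion H; auto. Qed.

Lemma mteq_tight A B : mteq A B -> tight_m A -> tight_m B.
Proof.
  intros (B' & HB & HF) HA; unfold tight_m.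
  apply (Permutation_Forall (Permutation_sym HB)).
  clear HB; induction HF; inversion HA; subst; constructor; eauto using teq_tight.
Qed.

Definition ceq (G G' : ctx) : Prop := forall y, mteq (G y) (G' y).

(* [cins c d G] inserts [d] unused variables at index [c]; it is the context
   of [lift d c t] when [G] types [t]. *)
Definition cins (c d : nat) (G : ctx) : ctx :=
  fun y => if y <? c then G y else if y <? c + d then [] else G (y - d).

Definition cremove (k : nat) (G : ctx) : ctx :=
  fun y => if y <? k then G y else G (S y).

(* The context of [subst k u t] when [G] types [t] and [D] types [u]: the
   variable [k] disappears and the free variables of [u] are shifted above
   the [k] binders crossed by the substitution. *)
Definition csubst (k : nat) (G D : ctx) : ctx := cand (cremove k G) (cins 0 k D).

Ltac nat_cases :=
  repeat match goal with
  | |- context [Nat.ltb ?a ?b] => destruct (Nat.ltb_spec a b)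
  | |- context [Nat.eqb ?a ?b] => destruct (Nat.eqb_spec a b)
  end.

Ltac ctx_unfold := unfold csubst, cins, cremove, csingle, cand, cdrop, cempty in *.

Ltac args_eq := solve [lia | reflexivity | f_equal; args_eq].

Ltac ctx_ext :=
  apply functional_extensionality; intro; ctx_unfold; nat_cases; simpl;
  rewrite ?app_nil_r; try lia; args_eq.

Lemma cins_cempty c d : cins c d cempty = cempty.
Proof. ctx_ext. Qed.

Lemma cins_cand c d G D : cins c d (cand G D) = cand (cins c d G) (cins c d D).
Proof. ctx_ext. Qed.

Lemma cins_cdrop c d n G : cins c d (cdrop n G) = cdrop n (cins (c + n) d G).
Proof. ctx_ext. Qed.

Lemma cins_csingle_lt c d x A : x < c -> cins c d (csingle x A) = csingle x A.
Proof. intro; ctx_ext. Qed.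

Lemma cins_csingle_ge c d x A : c <= x -> cins c d (csingle x A) = csingle (x + d) A.
Proof. intro; ctx_ext. Qed.

Lemma cins_low c d G i : i < c -> cins c d G i = G i.
Proof. intro; ctx_unfold; nat_cases; lia || reflexivity. Qed.

Lemma cins_0_r c D : cins c 0 D = D.
Proof. ctx_ext. Qed.

Lemma cins_0_add n q D : cins 0 (n + q) D = cins 0 n (cins 0 q D).
Proof. ctx_ext. Qed.

Lemma cdrop_cand n G D : cdrop n (cand G D) = cand (cdrop n G) (cdrop n D).
Proof. reflexivity. Qed.

Lemma cdrop_cins_0 n D : cdrop n (cins 0 n D) = D.
Proof. ctx_ext. Qed.

Lemma cand_cins_0_low G n D i : i < n -> cand G (cins 0 n D) i = G i.
Proof. intro; ctx_unfold; nat_cases; simpl; rewrite ?app_nil_r; lia || reflexivity. Qed.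

Lemma cand_cempty_r G : cand G cempty = G.
Proof. ctx_ext. Qed.
Lemma cand_assoc G D E : cand (cand G D) E = cand G (cand D E).
Proof. apply functional_extensionality; intro; symmetry; apply app_assoc. Qed.

Lemma ceq_refl G : ceq G G.
Proof. intro; apply mteq_refl. Qed.

Lemma ceq_sym G G' : ceq G G' -> ceq G' G.
Proof. intros H y; apply mteq_sym; auto. Qed.

Lemma ceq_trans G1 G2 G3 : ceq G1 G2 -> ceq G2 G3 -> ceq G1 G3.
Proof. intros H1 H2 y; eapply mteq_trans; eauto. Qed.

Lemma ceq_perm G G' : (forall y, Permutation (G y) (G' y)) -> ceq G G'.
Proof. intros H y; apply mteq_perm; auto. Qed.

Lemma ceq_cand G D G' D' : ceq G G' -> ceq D D' -> ceq (cand G D) (cand G' D').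
Proof. intros H1 H2 y; apply mteq_app; auto. Qed.

Lemma ceq_cdrop n G G' : ceq G G' -> ceq (cdrop n G) (cdrop n G').
Proof. intros H y; apply H. Qed.

Lemma ceq_cins c d G G' : ceq G G' -> ceq (cins c d G) (cins c d G').
Proof. intros H y; unfold cins; nat_cases; auto using mteq_refl. Qed.

Lemma ceq_cand_comm G D : ceq (cand G D) (cand D G).
Proof. apply ceq_perm; intro; apply Permutation_app_comm. Qed.

Lemma ceq_cand_swap_r G D1 D2 : ceq (cand (cand G D1) D2) (cand (cand G D2) D1).
Proof.
  apply ceq_perm; intro; unfold cand; rewrite <- !app_assoc.
  apply Permutation_app_head, Permutation_app_comm.
Qed.

Lemma ceq_tight G G' : ceq G G' -> tight_ctx G -> tight_ctx G'.
Proof. intros H T y; eapply mteq_tight; eauto. Qed.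

Lemma tight_cand G D : tight_ctx (cand G D) <-> tight_ctx G /\ tight_ctx D.
Proof.
  unfold tight_ctx, tight_m, cand; split.
  - intro H; split; intro y; specialize (H y); apply Forall_app in H; tauto.
  - intros [H1 H2] y; apply Forall_app; auto.
Qed.

Lemma tight_cempty : tight_ctx cempty.
Proof. intro; constructor. Qed.

Lemma tight_cdrop n G :
  tight_ctx (cdrop n G) -> (forall i, i < n -> tight_m (G i)) -> tight_ctx G.
Proof.
  intros H1 H2 y; destruct (Nat.ltb_spec y n); auto.
  specialize (H1 (y - n)); unfold cdrop in H1; rewrite Nat.sub_add in H1; auto.
Qed.

Lemma ptyp_ext G k p A e m f G' k' :
  ptyp G k p A e m f -> (forall i, i < psize p -> G (k + i) = G' (k' + i)) ->
  ptyp G' k' p A e m f.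
Proof.
  intro H; revert G' k'; induction H as [G k | G k p q A B ep mp fp eq mq fq Hp IHp Hq IHq |
    G k p q Htight]; intros G' k' HG; simpl in *.
  - specialize (HG 0 ltac:(lia)); rewrite !Nat.add_0_r in HG; rewrite HG; constructor.
  - constructor; [apply IHp | apply IHq]; intros i Hi;
      [apply HG; lia | rewrite <- !Nat.add_assoc; apply HG; lia].
  - constructor; intros i Hi; replace i with (k' + (i - k')) by lia.
    rewrite <- HG by (simpl in *; lia); apply Htight; simpl in *; lia.
Qed.

Lemma ptyp_ceq G k p A e m f G' k' :
  ptyp G k p A e m f -> (forall i, i < psize p -> mteq (G (k + i)) (G' (k' + i))) ->
  exists A', ptyp G' k' p A' e m f /\ mteq A A'.
Proof.
  intro H; revert G' k'; induction H as [G k | G k p q A B ep mp fp eq mq fq Hp IHp Hq IHq |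
    G k p q Htight]; intros G' k' HG; simpl in *.
  - specialize (HG 0 ltac:(lia)); rewrite !Nat.add_0_r in HG.
    eexists; split; [constructor | auto].
  - destruct (IHp G' k') as (A' & Hp' & HA); [intros; apply HG; lia |].
    destruct (IHq G' (k' + psize p)) as (B' & Hq' & HB);
      [intros; rewrite <- !Nat.add_assoc; apply HG; lia |].
    eexists; split; [constructor; eauto |].
    apply mteq_single, teq_prod_iff; auto.
  - eexists; split; [| apply mteq_refl].
    constructor; intros i Hi; replace i with (k' + (i - k')) by lia.
    eapply mteq_tight; [apply HG; simpl in *; lia |]; apply Htight; simpl in *; lia.
Qed.

Lemma ptyp_pair_single G k p q A e m f :
  ptyp G k (PPair p q) A e m f -> exists a, A = [a].
Proof. intro H; inversion H; eauto. Qed.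

Lemma typ_counts G t s b e m f b' e' m' f' :
  typ G t s b e m f -> b = b' -> e = e' -> m = m' -> f = f' -> typ G t s b' e' m' f'.
Proof. intros; subst; auto. Qed.
Lemma mtyp_counts G t A b e m f b' e' m' f' :
  mtyp G t A b e m f -> b = b' -> e = e' -> m = m' -> f = f' -> mtyp G t A b' e' m' f'.
Proof. intros; subst; auto. Qed.

Lemma mtyp_single G t s b e m f : typ G t s b e m f -> mtyp G t [s] b e m f.
Proof.
  intro H; rewrite <- (cand_cempty_r G), <- (Nat.add_0_r b), <- (Nat.add_0_r e),
    <- (Nat.add_0_r m), <- (Nat.add_0_r f).
  constructor; [exact H | constructor].
Qed.

Lemma mtyp_single_inv D t s b e m f : mtyp D t [s] b e m f -> typ D t s b e m f.
Proof.
  intro H; inversion H as [| G D0 ? ? ? b1 e1 m1 f1 b2 e2 m2 f2 Ht Hnil]; subst.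
  inversion Hnil; subst; rewrite cand_cempty_r, !Nat.add_0_r; exact Ht.
Qed.

Lemma mtyp_nil_inv D t b e m f :
  mtyp D t [] b e m f -> D = cempty /\ b = 0 /\ e = 0 /\ m = 0 /\ f = 0.
Proof. intro H; inversion H; auto. Qed.

Lemma mtyp_lift_of t c d :
  (forall G s b e m f, typ G t s b e m f -> typ (cins c d G) (lift d c t) s b e m f) ->
  forall G A b e m f, mtyp G t A b e m f -> mtyp (cins c d G) (lift d c t) A b e m f.
Proof.
  intros Ht G A b e m f H; induction H.
  - rewrite cins_cempty; constructor.
  - rewrite cins_cand; constructor; auto.
Qed.

Lemma typ_lift t : forall G s b e m f c d,
  typ G t s b e m f -> typ (cins c d G) (lift d c t) s b e m f.
Proof.
  induction t as [x | p t IHt | t1 IHt1 t2 IHt2 | t1 IHt1 t2 IHt2 | t1 IHt1 p t2 IHt2];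
    intros G s b e m f c d H; simpl.
  - inversion H; subst; destruct (Nat.ltb_spec x c).
    + rewrite cins_csingle_lt by auto; constructor.
    + rewrite cins_csingle_ge by auto; constructor.
  - inversion H as [| G1 ? ? s1 A ? ? ? ? ep mp fp Ht Hp | G1 ? ? s1 ? ? ? ? Ht Hs Hp | | | | |];
      subst; rewrite cins_cdrop.
    + apply ty_abs; [apply IHt; auto |].
      eapply ptyp_ext; [exact Hp |]; intros; rewrite cins_low by lia; auto.
    + eapply ty_abs_p; [apply IHt; eauto | auto |].
      intros; rewrite cins_low by lia; auto.
 - inversion H as [| | | | | G1 D ? ? A B bt et mt ft bu eu mu fu H1 H2 | | ]; subst.
    + rewrite cins_cand; constructor; eapply mtyp_lift_of; eauto.
    + rewrite cins_cempty; constructor.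
  - inversion H as [| | | G1 D ? ? A B ? bt et mt ft bu eu mu fu H1 H2 HAB | G1 ? ? ? ? ? ? H1 | | |];
      subst.
    + rewrite cins_cand; econstructor; [apply IHt1 | eapply mtyp_lift_of |]; eauto.
    + constructor; auto.
  - inversion H as [| | | | | | | G1 D ? ? ? ? A B bt et mt ft ep mp fp bu eu mu fu H1 Hp H2 HAB];
      subst.
    rewrite cins_cand, cins_cdrop; econstructor; [apply IHt1 | | eapply mtyp_lift_of |]; eauto.
    eapply ptyp_ext; [exact Hp |]; intros; rewrite cins_low by lia; auto.
Qed.

Lemma mtyp_lift G u A b e m f c d :
  mtyp G u A b e m f -> mtyp (cins c d G) (lift d c u) A b e m f.
Proof. apply mtyp_lift_of; intros; apply typ_lift; auto. Qed.

Lemma mtyp_unlift_of t c d :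
  (forall G' s b e m f, typ G' (lift d c t) s b e m f ->
     exists G, G' = cins c d G /\ typ G t s b e m f) ->
  forall G' A b e m f, mtyp G' (lift d c t) A b e m f ->
  exists G, G' = cins c d G /\ mtyp G t A b e m f.
Proof.
  intros Ht G' A b e m f H; remember (lift d c t) as t' eqn:E.
  induction H as [? | G' D' ? s A b e m f b' e' m' f' Hs _ IH]; subst.
  - exists cempty; split; [symmetry; apply cins_cempty | constructor].
  - destruct (Ht _ _ _ _ _ _ Hs) as (G & -> & HG).
    destruct IH as (D & -> & HD); auto.
    exists (cand G D); split; [symmetry; apply cins_cand | constructor; auto].
Qed.

Lemma typ_unlift t : forall c d G' s b e m f,
  typ G' (lift d c t) s b e m f -> exists G, G' = cins c d G /\ typ G t s b e m f.
Proof.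
  induction t as [x | p t IHt | t1 IHt1 t2 IHt2 | t1 IHt1 t2 IHt2 | t1 IHt1 p t2 IHt2];
    intros c d G' s b e m f H; simpl in H.
  - destruct (Nat.ltb_spec x c); inversion H; subst;
      exists (csingle x [s]); (split; [| constructor]).
    + rewrite cins_csingle_lt; auto.
    + rewrite cins_csingle_ge; auto.
  - inversion H as [| G1 ? ? s1 A ? ? ? ? ep mp fp Ht Hp | G1 ? ? s1 ? ? ? ? Ht Hs Hp | | | | |];
      subst; destruct (IHt _ _ _ _ _ _ _ _ Ht) as (G0 & -> & H0);
      exists (cdrop (psize p) G0); (split; [symmetry; apply cins_cdrop |]).
    + apply ty_abs; [auto |].
      eapply ptyp_ext; [exact Hp |]; intros; rewrite cins_low by lia; auto.
    + eapply ty_abs_p; [eauto | auto |].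
      intros i Hi; specialize (Hp i Hi); rewrite cins_low in Hp by lia; auto.
  - inversion H as [| | | | | G1 D ? ? A B bt et mt ft bu eu mu fu H1 H2 | | ]; subst.
    + destruct (mtyp_unlift_of _ _ _ (IHt1 c d) _ _ _ _ _ _ H1) as (G0 & -> & H0).
      destruct (mtyp_unlift_of _ _ _ (IHt2 c d) _ _ _ _ _ _ H2) as (D0 & -> & HD0).
      exists (cand G0 D0); split; [symmetry; apply cins_cand | constructor; auto].
    + exists cempty; split; [symmetry; apply cins_cempty | constructor].
  - inversion H as [| | | G1 D ? ? A B ? bt et mt ft bu eu mu fu H1 H2 HAB | G1 ? ? ? ? ? ? H1 | | |];
      subst.
    + destruct (IHt1 _ _ _ _ _ _ _ _ H1) as (G0 & -> & H0).
      destruct (mtyp_unlift_of _ _ _ (IHt2 c d) _ _ _ _ _ _ H2) as (D0 & -> & HD0).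
      exists (cand G0 D0); split; [symmetry; apply cins_cand | econstructor; eauto].
    + destruct (IHt1 _ _ _ _ _ _ _ _ H1) as (G0 & -> & H0).
      exists G0; split; [reflexivity | constructor; auto].
  - inversion H as [| | | | | | | G1 D ? ? ? ? A B bt et mt ft ep mp fp bu eu mu fu H1 Hp H2 HAB];
      subst.
    destruct (IHt1 _ _ _ _ _ _ _ _ H1) as (G0 & -> & H0).
    destruct (mtyp_unlift_of _ _ _ (IHt2 c d) _ _ _ _ _ _ H2) as (D0 & -> & HD0).
    exists (cand (cdrop (psize p) G0) D0).
    split; [rewrite cins_cand, cins_cdrop; reflexivity | econstructor; eauto].
    eapply ptyp_ext; [exact Hp |]; intros; rewrite cins_low by lia; auto.
Qed.

Lemma mtyp_unlift G' u A b e m f c d :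
  mtyp G' (lift d c u) A b e m f -> exists G, G' = cins c d G /\ mtyp G u A b e m f.
Proof. apply mtyp_unlift_of, typ_unlift. Qed.

Lemma mtyp_perm D u B b e m f B' :
  mtyp D u B b e m f -> Permutation B B' -> exists D', mtyp D' u B' b e m f /\ ceq D D'.
Proof.
  intros H HB; revert D b e m f H; induction HB as [| s B B' _ IH | s s' B | B B' B'' _ IH1 _ IH2];
    intros D b e m f H.
  - exists D; split; auto using ceq_refl.
  - inversion H as [| G D1 ? ? ? b1 e1 m1 f1 b2 e2 m2 f2 Hs HB]; subst.
    destruct (IH _ _ _ _ _ HB) as (D' & HB' & HD).
    exists (cand G D'); split; [constructor |]; auto using ceq_cand, ceq_refl.
  - inversion H as [| G D1 ? ? ? b1 e1 m1 f1 b2 e2 m2 f2 Hs HB]; subst.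
    inversion HB as [| G' D2 ? ? ? b1' e1' m1' f1' b2' e2' m2' f2' Hs' HB']; subst.
    eexists; split.
    + eapply mtyp_counts; [econstructor; [exact Hs' | econstructor; [exact Hs | exact HB']] | lia ..].
    + rewrite <- !cand_assoc; apply ceq_cand; [apply ceq_cand_comm | apply ceq_refl].
  - destruct (IH1 _ _ _ _ _ H) as (D1 & H1 & HD1).
    destruct (IH2 _ _ _ _ _ H1) as (D2 & H2 & HD2).
    exists D2; split; eauto using ceq_trans.
Qed.

Lemma mtyp_app_inv D u B1 B2 b e m f :
  mtyp D u (B1 ++ B2) b e m f ->
  exists D1 D2 b1 e1 m1 f1 b2 e2 m2 f2,
    mtyp D1 u B1 b1 e1 m1 f1 /\ mtyp D2 u B2 b2 e2 m2 f2 /\ D = cand D1 D2 /\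
    b = b1 + b2 /\ e = e1 + e2 /\ m = m1 + m2 /\ f = f1 + f2.
Proof.
  revert D b e m f; induction B1 as [| s B1 IH]; intros D b e m f H; simpl in H.
  - exists cempty, D, 0, 0, 0, 0, b, e, m, f; repeat split; constructor || auto.
  - inversion H as [| G D' ? ? ? b1 e1 m1 f1 b' e' m' f' Hs HB]; subst.
    destruct (IH _ _ _ _ _ HB)
      as (D1 & D2 & b1' & e1' & m1' & f1' & b2 & e2 & m2 & f2 & H1 & H2 & -> & -> & -> & -> & ->).
    exists (cand G D1), D2; do 8 eexists.
    split; [constructor; eauto |]; split; [eauto |].
    split; [symmetry; apply cand_assoc | lia].
Qed.

Lemma mtyp_app D1 D2 u B1 B2 b1 e1 m1 f1 b2 e2 m2 f2 :
  mtyp D1 u B1 b1 e1 m1 f1 -> mtyp D2 u B2 b2 e2 m2 f2 ->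
  mtyp (cand D1 D2) u (B1 ++ B2) (b1 + b2) (e1 + e2) (m1 + m2) (f1 + f2).
Proof.
  intros H1 H2; induction H1 as [| G D ? s B b e m f b' e' m' f' Hs _ IH]; simpl; [exact H2 |].
  rewrite cand_assoc; eapply mtyp_counts; [econstructor; eauto | lia ..].
Qed.

Lemma mtyp_split D u B b e m f A1 A2 :
  mtyp D u B b e m f -> mteq (A1 ++ A2) B ->
  exists D1 D2 B1 B2 b1 e1 m1 f1 b2 e2 m2 f2,
    mtyp D1 u B1 b1 e1 m1 f1 /\ mtyp D2 u B2 b2 e2 m2 f2 /\
    mteq A1 B1 /\ mteq A2 B2 /\ ceq D (cand D1 D2) /\
    b = b1 + b2 /\ e = e1 + e2 /\ m = m1 + m2 /\ f = f1 + f2.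
Proof.
  intros H (B' & HB & HAB).
  apply Forall2_app_inv_l in HAB as (B1 & B2 & HA1 & HA2 & ->).
  destruct (mtyp_perm _ _ _ _ _ _ _ _ H HB) as (D' & H' & HD).
  destruct (mtyp_app_inv _ _ _ _ _ _ _ _ H')
    as (D1 & D2 & b1 & e1 & m1 & f1 & b2 & e2 & m2 & f2 & H1 & H2 & -> & -> & -> & -> & ->).
  exists D1, D2, B1, B2; do 8 eexists; repeat split; eauto.
  - exists B1; split; auto.
  - exists B2; split; auto.
Qed.

(** * Substitution and anti-substitution *)

Lemma csubst_cand k G1 G2 D1 D2 D G1' G2' :
  ceq G1' (csubst k G1 D1) -> ceq G2' (csubst k G2 D2) -> ceq D (cand D1 D2) ->
  ceq (cand G1' G2') (csubst k (cand G1 G2) D).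
Proof.
  intros H1 H2 HD.
  eapply ceq_trans; [apply ceq_cand; eauto |].
  eapply ceq_trans; [| apply ceq_cand; [apply ceq_refl | apply ceq_cins, ceq_sym, HD]].
  rewrite cins_cand; apply ceq_perm; intro y; ctx_unfold; nat_cases; simpl; try lia;
    rewrite ?app_nil_r; try reflexivity.
  rewrite !app_assoc; apply Permutation_app_tail.
  rewrite <- !app_assoc; apply Permutation_app_head, Permutation_app_comm.
Qed.

Lemma csubst_cdrop n k G D : cdrop n (csubst (k + n) G D) = csubst k (cdrop n G) D.
Proof. ctx_ext. Qed.

Lemma csubst_low n k G D i : i < n -> csubst (k + n) G D i = G i.
Proof. intro; ctx_unfold; nat_cases; simpl; rewrite ?app_nil_r; lia || reflexivity. Qed.

Lemma ceq_csubst_cdrop n k G D G' :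
  ceq G' (csubst (k + n) G D) -> ceq (cdrop n G') (csubst k (cdrop n G) D).
Proof. intro H; rewrite <- csubst_cdrop; apply ceq_cdrop, H. Qed.

Lemma ceq_csubst_low n k G D G' i :
  ceq G' (csubst (k + n) G D) -> i < n -> mteq (G i) (G' i).
Proof. intros H Hi; rewrite <- (csubst_low n k G D i Hi); apply ceq_sym, H. Qed.

Lemma csubst_csingle_eq k A D : csubst k (csingle k A) D = cins 0 k D.
Proof. ctx_ext. Qed.

Lemma csubst_csingle_lt k x A : x < k -> csubst k (csingle x A) cempty = csingle x A.
Proof. intro; ctx_ext. Qed.

Lemma csubst_csingle_gt k x A : k < x -> csubst k (csingle x A) cempty = csingle (x - 1) A.
Proof. intro; ctx_ext. Qed.
Lemma csubst_0 G D : csubst 0 G D = cand (cdrop 1 G) D.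
Proof. ctx_ext. Qed.

Lemma csubst_cempty k : csubst k cempty cempty = cempty.
Proof. ctx_ext. Qed.

Definition subst_lemma_for (t : term) : Prop :=
  forall G s b e m f k u D B bu eu mu fu,
  typ G t s b e m f -> mtyp D u B bu eu mu fu -> mteq (G k) B ->
  exists G' s', typ G' (subst k u t) s' (b + bu) (e + eu) (m + mu) (f + fu) /\
    teq s s' /\ ceq G' (csubst k G D).

Lemma mtyp_subst_of t : subst_lemma_for t ->
  forall G A b e m f k u D B bu eu mu fu,
  mtyp G t A b e m f -> mtyp D u B bu eu mu fu -> mteq (G k) B ->
  exists G' A', mtyp G' (subst k u t) A' (b + bu) (e + eu) (m + mu) (f + fu) /\
    mteq A A' /\ ceq G' (csubst k G D).
Proof.
  intros Ht G A b e m f k u D B bu eu mu fu H; revert D B bu eu mu fu.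
  induction H as [? | G1 G2 ? s A b e m f b' e' m' f' Hs _ IH]; intros D B bu eu mu fu Hu HB.
  - apply mteq_nil_l in HB; subst B.
    apply mtyp_nil_inv in Hu as (-> & -> & -> & -> & ->).
    exists cempty, []; split; [constructor |]; split; [apply mteq_refl |].
    rewrite csubst_cempty; apply ceq_refl.
  - destruct (mtyp_split _ _ _ _ _ _ _ (G1 k) (G2 k) Hu HB) as (D1 & D2 & B1 & B2 & b1 & e1 & m1 & f1 &
      b2 & e2 & m2 & f2 & Hu1 & Hu2 & HB1 & HB2 & HD & -> & -> & -> & ->).
    destruct (Ht _ _ _ _ _ _ _ _ _ _ _ _ _ _ Hs Hu1 HB1) as (G1' & s' & Hs' & Hss' & HG1).
    destruct (IH Ht _ _ _ _ _ _ Hu2 HB2) as (G2' & A' & HA' & HAA' & HG2).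
    exists (cand G1' G2'), (s' :: A'); split; [eapply mtyp_counts; [econstructor; eauto | lia ..] |].
    split; [apply (mteq_app [s] A [s'] A'); auto using mteq_single |].
    eapply csubst_cand; eauto.
Qed.

Lemma subst_lemma_var x : subst_lemma_for (Var x).
Proof.
  intros G s b e m f k u D B bu eu mu fu H Hu HB; inversion H; subst; simpl.
  unfold csingle at 1 in HB; destruct (Nat.eqb_spec k x) as [<- | Hxk].
  - rewrite Nat.ltb_irrefl, Nat.eqb_refl.
    apply mteq_single_l in HB as (s' & -> & Hss').
    exists (cins 0 k D), s'; split; [apply typ_lift, mtyp_single_inv; auto |].
    split; [auto | rewrite csubst_csingle_eq; apply ceq_refl].
  - apply mteq_nil_l in HB; subst B.
    apply mtyp_nil_inv in Hu as (-> & -> & -> & -> & ->).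
    exists (csingle (if x <? k then x else x - 1) [s]), s.
    destruct (Nat.ltb_spec x k); [| destruct (Nat.eqb_spec x k); [lia |]];
      (split; [constructor | split; [apply teq_refl |]]).
    + rewrite csubst_csingle_lt by auto; apply ceq_refl.
    + rewrite csubst_csingle_gt by lia; apply ceq_refl.
Qed.

Lemma subst_lemma_lam p t : subst_lemma_for t -> subst_lemma_for (Lam p t).
Proof.
  intros IHt G s b e m f k u D B bu eu mu fu H Hu HB.
  inversion H as [| G1 ? ? s1 A ? ? ? ? ep mp fp Ht Hp | G1 ? ? s1 ? ? ? ? Ht Hs Hp | | | | |];
    subst; destruct (IHt _ _ _ _ _ _ (k + psize p) _ _ _ _ _ _ _ Ht Hu HB)
      as (G1' & s1' & Ht' & Hs1 & HG1); simpl; exists (cdrop (psize p) G1').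
  - destruct (ptyp_ceq _ _ _ _ _ _ _ G1' 0 Hp) as (A' & Hp' & HA);
      [intros; eapply ceq_csubst_low; eauto |].
    exists (TArr A' s1'); split; [eapply typ_counts; [apply ty_abs; eauto | lia ..] |].
    split; [apply teq_arr_iff; auto | apply ceq_csubst_cdrop; auto].
  - exists TM; split; [eapply typ_counts; [eapply ty_abs_p; eauto | lia ..] |].
    + eapply teq_tight; eauto.
    + intros i Hi; eapply mteq_tight; [eapply ceq_csubst_low; eauto | auto].
    + split; [apply teq_refl | apply ceq_csubst_cdrop; auto].
Qed.

Lemma subst_lemma_pair t1 t2 :
  subst_lemma_for t1 -> subst_lemma_for t2 -> subst_lemma_for (Pair t1 t2).
Proof.
  intros IHt1 IHt2 G s b e m f k u D B bu eu mu fu H Hu HB.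
  inversion H as [| | | | | G1 G2 ? ? A1 A2 bt et mt ft bt' et' mt' ft' H1 H2 | | ]; subst.
  - destruct (mtyp_split _ _ _ _ _ _ _ _ _ Hu HB) as (D1 & D2 & B1 & B2 & b1 & e1 & m1 & f1 &
      b2 & e2 & m2 & f2 & Hu1 & Hu2 & HB1 & HB2 & HD & -> & -> & -> & ->).
    destruct (mtyp_subst_of _ IHt1 _ _ _ _ _ _ _ _ _ _ _ _ _ _ H1 Hu1 HB1)
      as (G1' & A1' & H1' & HA1 & HG1).
    destruct (mtyp_subst_of _ IHt2 _ _ _ _ _ _ _ _ _ _ _ _ _ _ H2 Hu2 HB2)
      as (G2' & A2' & H2' & HA2 & HG2).
    exists (cand G1' G2'), (TProd A1' A2').
    split; [eapply typ_counts; [econstructor; eauto | lia ..] |].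
    split; [apply teq_prod_iff; auto | eapply csubst_cand; eauto].
  - apply mteq_nil_l in HB; subst B.
    apply mtyp_nil_inv in Hu as (-> & -> & -> & -> & ->).
    exists cempty, TM; split; [constructor |].
    split; [apply teq_refl | rewrite csubst_cempty; apply ceq_refl].
Qed.

Lemma subst_lemma_app t1 t2 :
  subst_lemma_for t1 -> subst_lemma_for t2 -> subst_lemma_for (App t1 t2).
Proof.
  intros IHt1 IHt2 G s b e m f k u D B bu eu mu fu H Hu HB.
  inversion H as [| | | G1 G2 ? ? A1 A2 ? bt et mt ft bt' et' mt' ft' H1 H2 HA12 |
    G1 ? ? ? ? ? ? H1 | | |]; subst.
  - destruct (mtyp_split _ _ _ _ _ _ _ _ _ Hu HB) as (D1 & D2 & B1 & B2 & b1 & e1 & m1 & f1 &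
      b2 & e2 & m2 & f2 & Hu1 & Hu2 & HB1 & HB2 & HD & -> & -> & -> & ->).
    destruct (IHt1 _ _ _ _ _ _ _ _ _ _ _ _ _ _ H1 Hu1 HB1) as (G1' & s1 & H1' & Hs1 & HG1).
    destruct (mtyp_subst_of _ IHt2 _ _ _ _ _ _ _ _ _ _ _ _ _ _ H2 Hu2 HB2)
      as (G2' & A2' & H2' & HA2 & HG2).
    destruct (teq_arr_inv _ _ _ Hs1) as (A1' & s' & ->); apply teq_arr_iff in Hs1 as [HA1 Hs'].
    exists (cand G1' G2'), s'.
    split; [eapply typ_counts; [econstructor; eauto | lia ..] |].
    + exact (mteq_trans _ _ _ (mteq_sym _ _ HA1) (mteq_trans _ _ _ HA12 HA2)).
    + split; [auto | eapply csubst_cand; eauto].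
  - destruct (IHt1 _ _ _ _ _ _ _ _ _ _ _ _ _ _ H1 Hu HB) as (G1' & s1 & H1' & Hs1 & HG1).
    apply teq_TN in Hs1; subst s1.
    exists G1', TN; split; [eapply typ_counts; [econstructor; eauto | lia ..] |].
    split; [constructor | auto].
Qed.

Lemma subst_lemma_sub t1 p t2 :
  subst_lemma_for t1 -> subst_lemma_for t2 -> subst_lemma_for (Sub t1 p t2).
Proof.
  intros IHt1 IHt2 G s b e m f k u D B bu eu mu fu H Hu HB.
  inversion H as [| | | | | | | G1 G2 ? ? ? ? A A2 bt et mt ft ep mp fp bt' et' mt' ft'
    H1 Hp H2 HA2]; subst.
  destruct (mtyp_split _ _ _ _ _ _ _ _ _ Hu HB) as (D1 & D2 & B1 & B2 & b1 & e1 & m1 & f1 &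
    b2 & e2 & m2 & f2 & Hu1 & Hu2 & HB1 & HB2 & HD & -> & -> & -> & ->).
  destruct (IHt1 _ _ _ _ _ _ (k + psize p) _ _ _ _ _ _ _ H1 Hu1 HB1) as (G1' & s1 & H1' & Hs1 & HG1).
  destruct (ptyp_ceq _ _ _ _ _ _ _ G1' 0 Hp) as (A' & Hp' & HA);
    [intros; eapply ceq_csubst_low; eauto |].
  destruct (mtyp_subst_of _ IHt2 _ _ _ _ _ _ _ _ _ _ _ _ _ _ H2 Hu2 HB2)
    as (G2' & A2' & H2' & HA2' & HG2).
  exists (cand (cdrop (psize p) G1') G2'), s1.
  split; [eapply typ_counts; [econstructor; eauto | lia ..] |].
  - exact (mteq_trans _ _ _ (mteq_sym _ _ HA) (mteq_trans _ _ _ HA2 HA2')).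
  - split; [auto | eapply csubst_cand; [apply ceq_csubst_cdrop | |]; eauto].
Qed.

Lemma typ_subst t : subst_lemma_for t.
Proof.
  induction t; auto using subst_lemma_var, subst_lemma_lam, subst_lemma_pair,
    subst_lemma_app, subst_lemma_sub.
Qed.

Definition antisubst_lemma_for (t : term) : Prop :=
  forall G' s b e m f k u, typ G' (subst k u t) s b e m f ->
  exists G D B s' b1 e1 m1 f1 b2 e2 m2 f2,
    typ G t s' b1 e1 m1 f1 /\ teq s s' /\ mtyp D u B b2 e2 m2 f2 /\ mteq (G k) B /\
    ceq G' (csubst k G D) /\
    b = b1 + b2 /\ e = e1 + e2 /\ m = m1 + m2 /\ f = f1 + f2.

Lemma mtyp_antisubst_of t : antisubst_lemma_for t ->
  forall G' A b e m f k u, mtyp G' (subst k u t) A b e m f ->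
  exists G D B A' b1 e1 m1 f1 b2 e2 m2 f2,
    mtyp G t A' b1 e1 m1 f1 /\ mteq A A' /\ mtyp D u B b2 e2 m2 f2 /\ mteq (G k) B /\
    ceq G' (csubst k G D) /\
    b = b1 + b2 /\ e = e1 + e2 /\ m = m1 + m2 /\ f = f1 + f2.
Proof.
  intros Ht G' A b e m f k u H; remember (subst k u t) as t' eqn:E.
  induction H as [? | G1' G2' ? s A b e m f b' e' m' f' Hs _ IH]; subst.
  - exists cempty, cempty, [], []; do 8 exists 0.
    repeat split; try constructor; try apply mteq_refl.
    rewrite csubst_cempty; apply ceq_refl.
  - destruct (Ht _ _ _ _ _ _ _ _ Hs) as (G1 & D1 & B1 & s1 & b1 & e1 & m1 & f1 &
      b2 & e2 & m2 & f2 & H1 & Hs1 & Hu1 & HB1 & HG1 & -> & -> & -> & ->).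
    destruct IH as (G2 & D2 & B2 & A2 & b3 & e3 & m3 & f3 &
      b4 & e4 & m4 & f4 & H2 & HA2 & Hu2 & HB2 & HG2 & -> & -> & -> & ->); auto.
    exists (cand G1 G2), (cand D1 D2), (B1 ++ B2), (s1 :: A2); do 8 eexists.
    split; [eapply mtyp_counts; [econstructor; eauto | reflexivity ..] |].
    split; [apply (mteq_app [s] A [s1] A2); auto using mteq_single |].
    split; [eapply mtyp_app; eauto |].
    split; [apply mteq_app; auto |].
    split; [eapply csubst_cand; eauto using ceq_refl | lia].
Qed.

Lemma antisubst_lemma_var x : antisubst_lemma_for (Var x).
Proof.
  intros G' s b e m f k u H; simpl in H.
  destruct (Nat.ltb_spec x k); [| destruct (Nat.eqb_spec x k) as [-> | Hxk]].
  - inversion H; subst.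
    exists (csingle x [s]), cempty, [], s; do 8 exists 0.
    split; [constructor |]; split; [apply teq_refl |]; split; [constructor |].
    unfold csingle at 1; destruct (Nat.eqb_spec k x); [lia |].
    split; [apply mteq_refl |]; split; [rewrite csubst_csingle_lt by auto; apply ceq_refl | lia].
  - destruct (typ_unlift _ _ _ _ _ _ _ _ _ H) as (Gu & -> & Hu).
    exists (csingle k [s]), Gu, [s], s; do 4 exists 0; do 4 eexists.
    split; [constructor |]; split; [apply teq_refl |]; split; [apply mtyp_single; eauto |].
    unfold csingle at 1; rewrite Nat.eqb_refl.
    split; [apply mteq_refl |]; split; [rewrite csubst_csingle_eq; apply ceq_refl | lia].
  - inversion H; subst.
    exists (csingle x [s]), cempty, [], s; do 8 exists 0.
    split; [constructor |]; split; [apply teq_refl |]; split; [constructor |].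
    unfold csingle at 1; destruct (Nat.eqb_spec k x); [lia |].
    split; [apply mteq_refl |]; split; [rewrite csubst_csingle_gt by lia; apply ceq_refl | lia].
Qed.

Lemma antisubst_lemma_lam p t : antisubst_lemma_for t -> antisubst_lemma_for (Lam p t).
Proof.
  intros IHt G' s b e m f k u H; simpl in H.
  inversion H as [| G1' ? ? s1 A ? ? ? ? ep mp fp Ht Hp | G1' ? ? s1 ? ? ? ? Ht Hs Hp | | | | |];
    subst; destruct (IHt _ _ _ _ _ _ _ _ Ht) as (G1 & D & B & s1' & b1 & e1 & m1 & f1 &
      b2 & e2 & m2 & f2 & Ht' & Hs1 & Hu & HB & HG1 & -> & -> & -> & ->).
  - destruct (ptyp_ceq _ _ _ _ _ _ _ G1 0 Hp) as (A' & Hp' & HA);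
      [intros; apply mteq_sym; eapply ceq_csubst_low; eauto |].
    exists (cdrop (psize p) G1), D, B, (TArr A' s1'); do 8 eexists.
    split; [apply ty_abs; eauto |]; split; [apply teq_arr_iff; auto |].
    split; [eauto |]; split; [exact HB |].
    split; [apply ceq_csubst_cdrop; auto | lia].
  - exists (cdrop (psize p) G1), D, B, TM; do 8 eexists.
    split; [eapply ty_abs_p; eauto |].
    + eapply teq_tight; eauto.
    + intros i Hi; eapply mteq_tight; [apply mteq_sym; eapply ceq_csubst_low; eauto | auto].
    + split; [apply teq_refl |]; split; [eauto |]; split; [exact HB |].
      split; [apply ceq_csubst_cdrop; auto | lia].
Qed.

Lemma antisubst_lemma_pair t1 t2 :
  antisubst_lemma_for t1 -> antisubst_lemma_for t2 -> antisubst_lemma_for (Pair t1 t2).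
Proof.
  intros IHt1 IHt2 G' s b e m f k u H; simpl in H.
  inversion H as [| | | | | G1' G2' ? ? A1 A2 bt et mt ft bt' et' mt' ft' H1 H2 | | ]; subst.
  - destruct (mtyp_antisubst_of _ IHt1 _ _ _ _ _ _ _ _ H1) as (G1 & D1 & B1 & A1' & b1 & e1 & m1 &
      f1 & b2 & e2 & m2 & f2 & H1' & HA1 & Hu1 & HB1 & HG1 & -> & -> & -> & ->).
    destruct (mtyp_antisubst_of _ IHt2 _ _ _ _ _ _ _ _ H2) as (G2 & D2 & B2 & A2' & b3 & e3 & m3 &
      f3 & b4 & e4 & m4 & f4 & H2' & HA2 & Hu2 & HB2 & HG2 & -> & -> & -> & ->).
    exists (cand G1 G2), (cand D1 D2), (B1 ++ B2), (TProd A1' A2'); do 8 eexists.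
    split; [econstructor; eauto |]; split; [apply teq_prod_iff; auto |].
    split; [eapply mtyp_app; eauto |]; split; [apply mteq_app; auto |].
    split; [eapply csubst_cand; eauto using ceq_refl | lia].
  - exists cempty, cempty, [], TM, 0, 0, 0, 1; do 4 exists 0.
    split; [constructor |]; split; [apply teq_refl |]; split; [constructor |].
    split; [apply mteq_refl |]; split; [rewrite csubst_cempty; apply ceq_refl | lia].
Qed.

Lemma antisubst_lemma_app t1 t2 :
  antisubst_lemma_for t1 -> antisubst_lemma_for t2 -> antisubst_lemma_for (App t1 t2).
Proof.
  intros IHt1 IHt2 G' s b e m f k u H; simpl in H.
  inversion H as [| | | G1' G2' ? ? A1 A2 ? bt et mt ft bt' et' mt' ft' H1 H2 HA12 |
    G1' ? ? ? ? ? ? H1 | | |]; subst;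
    destruct (IHt1 _ _ _ _ _ _ _ _ H1) as (G1 & D1 & B1 & s1 & b1 & e1 & m1 & f1 &
      b2 & e2 & m2 & f2 & H1' & Hs1 & Hu1 & HB1 & HG1 & -> & -> & -> & ->).
  - destruct (mtyp_antisubst_of _ IHt2 _ _ _ _ _ _ _ _ H2) as (G2 & D2 & B2 & A2' & b3 & e3 & m3 &
      f3 & b4 & e4 & m4 & f4 & H2' & HA2 & Hu2 & HB2 & HG2 & -> & -> & -> & ->).
    destruct (teq_arr_inv _ _ _ Hs1) as (A1' & s' & ->); apply teq_arr_iff in Hs1 as [HA1 Hs'].
    exists (cand G1 G2), (cand D1 D2), (B1 ++ B2), s'; do 8 eexists.
    split; [econstructor; eauto |].
    + exact (mteq_trans _ _ _ (mteq_sym _ _ HA1) (mteq_trans _ _ _ HA12 HA2)).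
    + split; [auto |]; split; [eapply mtyp_app; eauto |]; split; [apply mteq_app; auto |].
      split; [eapply csubst_cand; eauto using ceq_refl | lia].
  - apply teq_TN in Hs1; subst s1.
    exists G1, D1, B1, TN; do 8 eexists.
    split; [eapply ty_app_p; eauto |]; split; [constructor |].
    do 3 (split; [eauto |]); lia.
Qed.

Lemma antisubst_lemma_sub t1 p t2 :
  antisubst_lemma_for t1 -> antisubst_lemma_for t2 -> antisubst_lemma_for (Sub t1 p t2).
Proof.
  intros IHt1 IHt2 G' s b e m f k u H; simpl in H.
  inversion H as [| | | | | | | G1' G2' ? ? ? ? A A2 bt et mt ft ep mp fp bt' et' mt' ft'
    H1 Hp H2 HA2]; subst.
  destruct (IHt1 _ _ _ _ _ _ _ _ H1) as (G1 & D1 & B1 & s1 & b1 & e1 & m1 & f1 &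
    b2 & e2 & m2 & f2 & H1' & Hs1 & Hu1 & HB1 & HG1 & -> & -> & -> & ->).
  destruct (ptyp_ceq _ _ _ _ _ _ _ G1 0 Hp) as (A' & Hp' & HA);
    [intros; apply mteq_sym; eapply ceq_csubst_low; eauto |].
  destruct (mtyp_antisubst_of _ IHt2 _ _ _ _ _ _ _ _ H2) as (G2 & D2 & B2 & A2' & b3 & e3 & m3 &
    f3 & b4 & e4 & m4 & f4 & H2' & HA2' & Hu2 & HB2 & HG2 & -> & -> & -> & ->).
  exists (cand (cdrop (psize p) G1) G2), (cand D1 D2), (B1 ++ B2), s1; do 8 eexists.
  split; [econstructor; eauto |].
  - exact (mteq_trans _ _ _ (mteq_sym _ _ HA) (mteq_trans _ _ _ HA2 HA2')).
  - split; [auto |]; split; [eapply mtyp_app; eauto |]; split; [apply mteq_app; auto |].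
    split; [eapply csubst_cand; [apply ceq_csubst_cdrop | | apply ceq_refl]; eauto | lia].
Qed.

Lemma typ_antisubst t : antisubst_lemma_for t.
Proof.
  induction t; auto using antisubst_lemma_var, antisubst_lemma_lam, antisubst_lemma_pair,
    antisubst_lemma_app, antisubst_lemma_sub.
Qed.

(* [ltyp L Gi G b e m f]: the explicit substitutions of [L] turn a typing of
   the hole in context [Gi] into a typing of [plug L _] in context [G], adding
   the counters [b e m f]. *)
Inductive ltyp : lctx -> ctx -> ctx -> nat -> nat -> nat -> nat -> Prop :=
| ltyp_hole G : ltyp Hole G G 0 0 0 0
| ltyp_sub L p u Gi G1 D A B b e m f ep mp fp bu eu mu fu :
    ltyp L Gi G1 b e m f -> ptyp G1 0 p A ep mp fp ->
    mtyp D u B bu eu mu fu -> mteq A B ->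
    ltyp (LSub L p u) Gi (cand (cdrop (psize p) G1) D)
      (b + bu) (e + eu + ep) (m + mu + mp) (f + fu + fp).

Lemma typ_plug_inv L : forall t G s b e m f, typ G (plug L t) s b e m f ->
  exists Gi b1 e1 m1 f1 b2 e2 m2 f2,
    typ Gi t s b1 e1 m1 f1 /\ ltyp L Gi G b2 e2 m2 f2 /\
    b = b1 + b2 /\ e = e1 + e2 /\ m = m1 + m2 /\ f = f1 + f2.
Proof.
  induction L as [| L IHL p u]; intros t G s b e m f H; simpl in H.
  - exists G, b, e, m, f, 0, 0, 0, 0; repeat split; [auto | constructor | lia ..].
  - inversion H as [| | | | | | | G1 D ? ? ? ? A B bt et mt ft ep mp fp bu eu mu fu H1 Hp Hu HAB];
      subst.
    destruct (IHL _ _ _ _ _ _ _ H1)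
      as (Gi & b1 & e1 & m1 & f1 & b2 & e2 & m2 & f2 & Ht & HL & -> & -> & -> & ->).
    exists Gi; do 8 eexists; split; [eauto |]; split; [econstructor; eauto | lia].
Qed.

Lemma typ_plug L t Gi G s b1 e1 m1 f1 b2 e2 m2 f2 :
  typ Gi t s b1 e1 m1 f1 -> ltyp L Gi G b2 e2 m2 f2 ->
  typ G (plug L t) s (b1 + b2) (e1 + e2) (m1 + m2) (f1 + f2).
Proof.
  intros Ht HL; induction HL; simpl.
  - rewrite !Nat.add_0_r; auto.
  - eapply typ_counts; [econstructor; eauto | lia ..].
Qed.

Lemma ceq_cand_cins_low G n D G' D' i :
  ceq (cand G (cins 0 n D)) (cand G' (cins 0 n D')) -> i < n -> mteq (G i) (G' i).
Proof. intros H Hi; specialize (H i); rewrite !cand_cins_0_low in H; auto. Qed.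

Lemma ltyp_frame L Gi G b e m f : ltyp L Gi G b e m f ->
  forall Gi' D D', ceq (cand Gi (cins 0 (nbL L) D)) (cand Gi' (cins 0 (nbL L) D')) ->
  exists G', ltyp L Gi' G' b e m f /\ ceq (cand G D) (cand G' D').
Proof.
  induction 1 as [G | L p u Gi G1 Du A B b e m f ep mp fp bu eu mu fu HL IH Hp Hu HAB];
    intros Gi' D D' HGi; simpl in HGi.
  - exists Gi'; split; [apply ltyp_hole |]; rewrite !cins_0_r in HGi; exact HGi.
  - rewrite !cins_0_add in HGi.
    destruct (IH _ _ _ HGi) as (G1' & HL' & HG1).
    destruct (ptyp_ceq _ _ _ _ _ _ _ G1' 0 Hp) as (A' & Hp' & HA);
      [intros; eapply ceq_cand_cins_low; eauto |].
    exists (cand (cdrop (psize p) G1') Du); split.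
    + econstructor; eauto; eapply mteq_trans; [apply mteq_sym |]; eauto.
    + apply (ceq_cdrop (psize p)) in HG1; rewrite !cdrop_cand, !cdrop_cins_0 in HG1.
      eapply ceq_trans; [apply ceq_cand_swap_r |].
      eapply ceq_trans; [| apply ceq_cand_swap_r]; apply ceq_cand; [exact HG1 | apply ceq_refl].
Qed.

Lemma typ_plug_lam_shape L p t G s b e m f :
  typ G (plug L (Lam p t)) s b e m f -> s = TM \/ exists A s', s = TArr A s'.
Proof.
  intro H; apply typ_plug_inv in H as (Gi & b1 & e1 & m1 & f1 & b2 & e2 & m2 & f2 & Ht & _).
  inversion Ht; eauto.
Qed.

Lemma typ_plug_pair_shape L t1 t2 G s b e m f :
  typ G (plug L (Pair t1 t2)) s b e m f -> s = TM \/ exists A B, s = TProd A B.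
Proof.
  intro H; apply typ_plug_inv in H as (Gi & b1 & e1 & m1 & f1 & b2 & e2 & m2 & f2 & Ht & _).
  inversion Ht; eauto.
Qed.

(** * Subject reduction and expansion *)

Lemma subject_reduction_b L p t u G s b e m f :
  typ G (App (plug L (Lam p t)) u) s b e m f ->
  exists G' b', typ G' (plug L (Sub t p (lift (nbL L) 0 u))) s b' e m f /\
    ceq G G' /\ b = 1 + b'.
Proof.
  intro H.
  inversion H as [| | | G1 D ? ? A B ? bt et mt ft bu eu mu fu H1 Hu HAB | G1 ? ? ? ? ? ? H1 | | |];
    subst.
  - apply typ_plug_inv in H1
      as (Gi & b1 & e1 & m1 & f1 & b2 & e2 & m2 & f2 & Hl & HL & -> & -> & -> & ->).
    inversion Hl as [| G0 ? ? ? ? ? ? ? ? ep mp fp Ht Hp | | | | | |]; subst.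
    pose proof (ty_match _ _ _ _ _ _ _ _ _ _ _ _ _ _ _ _ _ _ _ Ht Hp
      (mtyp_lift _ _ _ _ _ _ _ 0 (nbL L) Hu) HAB) as Hm.
    destruct (ltyp_frame _ _ _ _ _ _ _ HL (cand (cdrop (psize p) G0) (cins 0 (nbL L) D)) D cempty)
      as (G' & HL' & HG); [rewrite cins_cempty, cand_cempty_r; apply ceq_refl |].
    rewrite cand_cempty_r in HG.
    exists G'; eexists; split; [eapply typ_counts; [eapply typ_plug; eauto | reflexivity | lia ..] |].
    split; [exact HG | lia].
  - apply typ_plug_lam_shape in H1 as [? | (? & ? & ?)]; discriminate.
Qed.

Lemma subject_reduction_e t u G s b e m f :
  typ G (Sub t PVar u) s b e m f ->
  exists G' s' e', typ G' (subst 0 u t) s' b e' m f /\ ceq G G' /\ teq s s' /\ e = 1 + e'.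
Proof.
  intro H.
  inversion H as [| | | | | | | G1 D ? ? ? ? A B bt et mt ft ep mp fp bu eu mu fu H1 Hp Hu HAB];
    subst; inversion Hp; subst.
  destruct (typ_subst _ _ _ _ _ _ _ 0 _ _ _ _ _ _ _ H1 Hu HAB) as (G' & s' & Ht & Hs & HG).
  exists G', s'; eexists; split; [eapply typ_counts; [exact Ht | lia | reflexivity | lia ..] |].
  split; [rewrite <- csubst_0; apply ceq_sym, HG | split; [exact Hs | lia]].
Qed.

Lemma typ_match_split t p1 p2 u1 u2 G s bt et mt ft A1 ep1 mp1 fp1 A2 ep2 mp2 fp2
    D1 B1 b1 e1 m1 f1 D2 B2 b2 e2 m2 f2 d :
  typ G t s bt et mt ft -> ptyp G 0 p1 A1 ep1 mp1 fp1 -> ptyp G (0 + psize p1) p2 A2 ep2 mp2 fp2 ->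
  mtyp D1 u1 B1 b1 e1 m1 f1 -> mteq A1 B1 -> mtyp D2 u2 B2 b2 e2 m2 f2 -> mteq A2 B2 ->
  typ (cand (cand (cins 0 d (cdrop (psize p1 + psize p2) G)) D1) D2)
    (Sub (Sub (lift d (psize p1 + psize p2) t) p1 (lift (psize p2) 0 u1)) p2 u2) s
    (bt + b1 + b2) (et + e1 + ep1 + e2 + ep2) (mt + m1 + mp1 + m2 + mp2)
    (ft + f1 + fp1 + f2 + fp2).
Proof.
  intros Ht Hp1 Hp2 Hu1 HA1 Hu2 HA2.
  apply (typ_lift _ _ _ _ _ _ _ (psize p1 + psize p2) d) in Ht.
  apply (mtyp_lift _ _ _ _ _ _ _ 0 (psize p2)) in Hu1.
  eapply ty_match in Ht; [| eapply ptyp_ext; [exact Hp1 |] | exact Hu1 | exact HA1].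
  2: { intros; rewrite cins_low by lia; reflexivity. }
  eapply ty_match in Ht; [| eapply ptyp_ext; [exact Hp2 |] | exact Hu2 | exact HA2].
  2: { intros; rewrite cand_cins_0_low by lia; unfold cdrop; rewrite cins_low by lia.
       f_equal; lia. }
  replace (cand (cand (cins 0 d (cdrop (psize p1 + psize p2) G)) D1) D2) with
    (cand (cdrop (psize p2) (cand (cdrop (psize p1) (cins (psize p1 + psize p2) d G))
      (cins 0 (psize p2) D1))) D2) by ctx_ext.
  eapply typ_counts; [exact Ht | lia ..].
Qed.

Lemma subject_reduction_m t p1 p2 L u1 u2 G s b e m f :
  typ G (Sub t (PPair p1 p2) (plug L (Pair u1 u2))) s b e m f ->
  exists G' m', typ G' (plug L (Sub (Sub (lift (nbL L) (psize p1 + psize p2) t) p1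
      (lift (psize p2) 0 u1)) p2 u2)) s b e m' f /\ ceq G G' /\ m = 1 + m'.
Proof.
  intro H.
  inversion H as [| | | | | | | G1 D ? ? ? ? A B bt et mt ft ep mp fp bu eu mu fu H1 Hp Hu HAB];
    subst.
  inversion Hp as [| ? ? ? ? A1 A2 ep1 mp1 fp1 ep2 mp2 fp2 Hp1 Hp2 | ? ? ? ? Htight]; subst;
    apply mteq_single_l in HAB as (b0 & -> & Hb0); apply mtyp_single_inv in Hu.
  - destruct (teq_prod_inv _ _ _ Hb0) as (B1 & B2 & ->); apply teq_prod_iff in Hb0 as [HA1 HA2].
    apply typ_plug_inv in Hu
      as (Gi & b1 & e1 & m1 & f1 & b2 & e2 & m2 & f2 & Hpair & HL & -> & -> & -> & ->).
    inversion Hpair as [| | | | | Du1 Du2 ? ? ? ? c1 d1 n1 g1 c2 d2 n2 g2 Hu1 Hu2 | |]; subst.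
    pose proof (typ_match_split _ _ _ _ _ _ _ _ _ _ _ _ _ _ _ _ _ _ _ _ _ _ _ _ _ _ _ _ _ _ _
      (nbL L) H1 Hp1 Hp2 Hu1 HA1 Hu2 HA2) as Hm.
    destruct (ltyp_frame _ _ _ _ _ _ _ HL
      (cand (cand (cins 0 (nbL L) (cdrop (psize p1 + psize p2) G1)) Du1) Du2)
      (cdrop (psize p1 + psize p2) G1) cempty)
      as (G' & HL' & HG).
    { rewrite cins_cempty, cand_cempty_r; apply ceq_perm; intro; unfold cand.
      symmetry; rewrite <- app_assoc; apply Permutation_app_comm. }
    rewrite cand_cempty_r in HG.
    exists G'; eexists; split; [eapply typ_counts; [eapply typ_plug; eauto | lia | lia |
      reflexivity | lia] |].
    split; [eapply ceq_trans; [apply ceq_cand_comm | exact HG] | simpl; lia].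
  - apply teq_TN in Hb0; subst.
    apply typ_plug_pair_shape in Hu as [? | (? & ? & ?)]; discriminate.
Qed.

Definition subject_reduction_for (t : term) : Prop :=
  forall k t', hstep t k t' -> forall G s b e m f, typ G t s b e m f ->
  exists G' s' b' e' m', typ G' t' s' b' e' m' f /\ ceq G G' /\ teq s s' /\
    b = isB k + b' /\ e = isE k + e' /\ m = isM k + m'.

Lemma subject_reduction_lam p t :
  subject_reduction_for t -> subject_reduction_for (Lam p t).
Proof.
  intros IHt k v (t' & Hs & ->) G s b e m f H.
  inversion H as [| G1 ? ? s1 A ? ? ? ? ep mp fp Ht Hp | G1 ? ? s1 ? ? ? ? Ht Hs1 Hp | | | | |];
    subst; destruct (IHt _ _ Hs _ _ _ _ _ _ Ht)
      as (G1' & s1' & b' & e' & m' & Ht' & HG1 & Hs1' & -> & -> & ->).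
  - destruct (ptyp_ceq _ _ _ _ _ _ _ G1' 0 Hp) as (A' & Hp' & HA); [intros; apply HG1 |].
    exists (cdrop (psize p) G1'), (TArr A' s1'); do 3 eexists.
    split; [eapply typ_counts; [apply ty_abs; eauto | reflexivity ..] |].
    split; [apply ceq_cdrop; auto |]; split; [apply teq_arr_iff; auto | lia].
  - exists (cdrop (psize p) G1'), TM; do 3 eexists.
    split; [eapply ty_abs_p; eauto |].
    + eapply teq_tight; eauto.
    + intros i Hi; eapply mteq_tight; [apply HG1 | auto].
    + split; [apply ceq_cdrop; auto |]; split; [apply teq_refl | lia].
Qed.

Lemma subject_reduction_app t u :
  subject_reduction_for t -> subject_reduction_for (App t u).
Proof.
  intros IHt k v Hs G s b e m f H.
  destruct Hs as [[-> (L & p & t0 & -> & ->)] | [_ (t' & Hs & ->)]].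
  - destruct (subject_reduction_b _ _ _ _ _ _ _ _ _ _ H) as (G' & b' & Ht & HG & ->).
    exists G', s, b', e, m; repeat split; auto using teq_refl.
  - inversion H as [| | | G1 D ? ? A B ? bt et mt ft bu eu mu fu H1 Hu HAB |
      G1 ? ? ? ? ? ? H1 | | |]; subst;
      destruct (IHt _ _ Hs _ _ _ _ _ _ H1)
        as (G1' & s1 & b' & e' & m' & H1' & HG1 & Hs1 & -> & -> & ->).
    + destruct (teq_arr_inv _ _ _ Hs1) as (A' & s' & ->); apply teq_arr_iff in Hs1 as [HA Hs'].
      exists (cand G1' D), s'; do 3 eexists.
      split; [eapply typ_counts; [econstructor; eauto | reflexivity ..] |].
      * exact (mteq_trans _ _ _ (mteq_sym _ _ HA) HAB).
      * split; [apply ceq_cand; auto using ceq_refl |]; split; [auto | lia].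
    + apply teq_TN in Hs1; subst s1.
      exists G1', TN; do 3 eexists.
      split; [eapply typ_counts; [apply ty_app_p; eauto | reflexivity ..] |].
      split; [auto |]; split; [constructor | lia].
Qed.

Lemma subject_reduction_sub t p u :
  subject_reduction_for t -> subject_reduction_for u -> subject_reduction_for (Sub t p u).
Proof.
  intros IHt IHu k v Hs G s b e m f H.
  destruct Hs as [(t' & Hs & ->) | [_ Hs]]; [| destruct p as [| p1 p2]].
  - inversion H as [| | | | | | | G1 D ? ? ? ? A B bt et mt ft ep mp fp bu eu mu fu H1 Hp Hu HAB];
      subst.
    destruct (IHt _ _ Hs _ _ _ _ _ _ H1)
      as (G1' & s1 & b' & e' & m' & H1' & HG1 & Hs1 & -> & -> & ->).
    destruct (ptyp_ceq _ _ _ _ _ _ _ G1' 0 Hp) as (A' & Hp' & HA); [intros; apply HG1 |].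
    exists (cand (cdrop (psize p) G1') D), s1; do 3 eexists.
    split; [eapply typ_counts; [econstructor; eauto | reflexivity ..] |].
    + exact (mteq_trans _ _ _ (mteq_sym _ _ HA) HAB).
    + split; [apply ceq_cand; auto using ceq_cdrop, ceq_refl |]; split; [auto | lia].
  - destruct Hs as [-> ->].
    destruct (subject_reduction_e _ _ _ _ _ _ _ _ H) as (G' & s' & e' & Ht & HG & Hs' & ->).
    exists G', s', b, e', m; repeat split; auto.
  - destruct Hs as [[-> (L & u1 & u2 & -> & ->)] | (u' & Hs & ->)].
    + destruct (subject_reduction_m _ _ _ _ _ _ _ _ _ _ _ _ H) as (G' & m' & Ht & HG & ->).
      exists G', s, b, e, m'; repeat split; auto using teq_refl.
    + inversion H as [| | | | | | | G1 D ? ? ? ? A B bt et mt ft ep mp fp bu eu mu fu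
        H1 Hp Hu HAB]; subst.
      destruct (ptyp_pair_single _ _ _ _ _ _ _ _ Hp) as (a & ->).
      apply mteq_single_l in HAB as (b0 & -> & Hab0); apply mtyp_single_inv in Hu.
      destruct (IHu _ _ Hs _ _ _ _ _ _ Hu)
        as (D' & s2 & b' & e' & m' & Hu' & HD & Hs2 & -> & -> & ->).
      exists (cand (cdrop (psize (PPair p1 p2)) G1) D'), s; do 3 eexists.
      split; [eapply typ_counts; [econstructor; [exact H1 | exact Hp | apply mtyp_single, Hu' |
        apply mteq_single; eapply teq_trans; eauto] | reflexivity ..] |].
      split; [apply ceq_cand; auto using ceq_refl |]; split; [apply teq_refl | lia].
Qed.

Lemma subject_reduction t : subject_reduction_for t.
Proof.
  induction t; try (intros k v Hs; contradiction);
    auto using subject_reduction_lam, subject_reduction_app, subject_reduction_sub.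
Qed.

Lemma subject_expansion_b L p t u G' s b e m f :
  typ G' (plug L (Sub t p (lift (nbL L) 0 u))) s b e m f ->
  exists G, typ G (App (plug L (Lam p t)) u) s (1 + b) e m f /\ ceq G G'.
Proof.
  intro H.
  apply typ_plug_inv in H as (Gi & b1 & e1 & m1 & f1 & b2 & e2 & m2 & f2 & Hm & HL & -> & -> & -> & ->).
  inversion Hm as [| | | | | | | G0 D' ? ? ? ? A B bt et mt ft ep mp fp bu eu mu fu Ht Hp Hu HAB];
    subst.
  destruct (mtyp_unlift _ _ _ _ _ _ _ _ _ Hu) as (D & -> & Hu').
  destruct (ltyp_frame _ _ _ _ _ _ _ HL (cdrop (psize p) G0) cempty D) as (G1 & HL' & HG);
    [rewrite cins_cempty, cand_cempty_r; apply ceq_refl |].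
  rewrite cand_cempty_r in HG.
  exists (cand G1 D); split; [| apply ceq_sym, HG].
  eapply typ_counts; [eapply ty_app; [eapply typ_plug; [apply ty_abs; eauto | eauto] | eauto |
    eauto] | lia ..].
Qed.

Lemma subject_expansion_e t u G' s b e m f :
  typ G' (subst 0 u t) s b e m f ->
  exists G s', typ G (Sub t PVar u) s' b (1 + e) m f /\ ceq G G' /\ teq s' s.
Proof.
  intro H.
  destruct (typ_antisubst _ _ _ _ _ _ _ _ _ H) as (G & D & B & s' & b1 & e1 & m1 & f1 &
    b2 & e2 & m2 & f2 & Ht & Hs & Hu & HB & HG & -> & -> & -> & ->).
  exists (cand (cdrop (psize PVar) G) D), s'.
  split; [eapply typ_counts; [econstructor; [exact Ht | apply pt_var | exact Hu | exact HB] |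
    simpl; lia ..] |].
  split; [rewrite <- csubst_0; apply ceq_sym, HG | apply teq_sym, Hs].
Qed.

Lemma typ_match_split_inv t p1 p2 u1 u2 d X s b e m f :
  typ X (Sub (Sub (lift d (psize p1 + psize p2) t) p1 (lift (psize p2) 0 u1)) p2 u2) s b e m f ->
  exists G Dp a B bt et mt ft ep mp fp bp ep' mp' fp',
    X = cand (cins 0 d (cdrop (psize p1 + psize p2) G)) Dp /\
    typ G t s bt et mt ft /\ ptyp G 0 (PPair p1 p2) [a] ep mp fp /\
    typ Dp (Pair u1 u2) B bp ep' mp' fp' /\ teq a B /\
    b = bt + bp /\ e = et + ep' + ep /\ 1 + m = mt + mp' + mp /\ f = ft + fp' + fp.
Proof.
  intro H.
  inversion H as [| | | | | | | Gin D2 ? ? ? ? A2 B2 bt et mt ft ep2 mp2 fp2 b2 e2 m2 f2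
    Hin Hp2 Hu2 HA2]; subst.
  inversion Hin as [| | | | | | | Gt D1' ? ? ? ? A1 B1 bt' et' mt' ft' ep1 mp1 fp1 b1 e1 m1 f1
    Ht Hp1 Hu1 HA1]; subst.
  destruct (typ_unlift _ _ _ _ _ _ _ _ _ Ht) as (G & -> & Ht').
  destruct (mtyp_unlift _ _ _ _ _ _ _ _ _ Hu1) as (D1 & -> & Hu1').
  exists G, (cand D1 D2), (TProd A1 A2), (TProd B1 B2); do 11 eexists.
  split; [rewrite <- cand_assoc; ctx_ext |].
  split; [exact Ht' |].
  split; [constructor; eapply ptyp_ext; eauto |].
  { intros; rewrite cins_low by lia; reflexivity. }
  { intros; rewrite cand_cins_0_low by lia; unfold cdrop; rewrite cins_low by lia.
    f_equal; lia. }
  split; [econstructor; eauto |].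
  split; [apply teq_prod_iff; auto | lia].
Qed.

Lemma subject_expansion_m t p1 p2 L u1 u2 G' s b e m f :
  typ G' (plug L (Sub (Sub (lift (nbL L) (psize p1 + psize p2) t) p1
      (lift (psize p2) 0 u1)) p2 u2)) s b e m f ->
  exists G, typ G (Sub t (PPair p1 p2) (plug L (Pair u1 u2))) s b e (1 + m) f /\ ceq G G'.
Proof.
  intro H.
  apply typ_plug_inv in H as (Gi & b1 & e1 & m1 & f1 & b2 & e2 & m2 & f2 & Hm & HL & -> & -> & -> & ->).
  apply typ_match_split_inv in Hm as (G & Dp & a & B & bt & et & mt & ft & ep & mp & fp &
    bp & ep' & mp' & fp' & -> & Ht & Hp & Hpair & HaB & -> & -> & Hm & ->).
  destruct (ltyp_frame _ _ _ _ _ _ _ HL Dp cempty (cdrop (psize p1 + psize p2) G))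
    as (G1 & HL' & HG).
  { rewrite cins_cempty, cand_cempty_r; apply ceq_cand_comm. }
  rewrite cand_cempty_r in HG.
  exists (cand (cdrop (psize (PPair p1 p2)) G) G1); split.
  - eapply typ_counts; [econstructor; [exact Ht | exact Hp |
      apply mtyp_single; eapply typ_plug; eauto | apply mteq_single; exact HaB] | lia ..].
  - eapply ceq_trans; [apply ceq_cand_comm | apply ceq_sym, HG].
Qed.

Definition subject_expansion_for (t : term) : Prop :=
  forall k t', hstep t k t' -> forall G' s' b e m f, typ G' t' s' b e m f ->
  exists G s, typ G t s (isB k + b) (isE k + e) (isM k + m) f /\ ceq G G' /\ teq s s'.

Lemma subject_expansion_lam p t :
  subject_expansion_for t -> subject_expansion_for (Lam p t).
Proof.
  intros IHt k v (t' & Hs & ->) G' s' b e m f H.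
  inversion H as [| G1' ? ? s1 A ? ? ? ? ep mp fp Ht Hp | G1' ? ? s1 ? ? ? ? Ht Hs1 Hp | | | | |];
    subst; destruct (IHt _ _ Hs _ _ _ _ _ _ Ht) as (G1 & s1' & Ht' & HG1 & Hs1').
  - destruct (ptyp_ceq _ _ _ _ _ _ _ G1 0 Hp) as (A' & Hp' & HA);
      [intros; apply mteq_sym, HG1 |].
    exists (cdrop (psize p) G1), (TArr A' s1').
    split; [eapply typ_counts; [apply ty_abs; eauto | lia ..] |].
    split; [apply ceq_cdrop; auto | apply teq_arr_iff; auto using mteq_sym].
  - exists (cdrop (psize p) G1), TM.
    split; [eapply ty_abs_p; eauto |].
    + eapply teq_tight; [apply teq_sym |]; eauto.
    + intros i Hi; eapply mteq_tight; [apply mteq_sym, HG1 | auto].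
    + split; [apply ceq_cdrop; auto | apply teq_refl].
Qed.

Lemma subject_expansion_app t u :
  subject_expansion_for t -> subject_expansion_for (App t u).
Proof.
  intros IHt k v Hs G' s' b e m f H.
  destruct Hs as [[-> (L & p & t0 & -> & ->)] | [_ (t' & Hs & ->)]].
  - destruct (subject_expansion_b _ _ _ _ _ _ _ _ _ _ H) as (G & Ht & HG).
    exists G, s'; auto using teq_refl.
  - inversion H as [| | | G1' D ? ? A B ? bt et mt ft bu eu mu fu H1 Hu HAB |
      G1' ? ? ? ? ? ? H1 | | |]; subst;
      destruct (IHt _ _ Hs _ _ _ _ _ _ H1) as (G1 & s1 & H1' & HG1 & Hs1).
    + destruct (teq_arr_inv _ _ _ (teq_sym _ _ Hs1)) as (A' & s'' & ->).
      apply teq_arr_iff in Hs1 as [HA Hs''].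
      exists (cand G1 D), s''.
      split; [eapply typ_counts; [econstructor; eauto | lia ..] |].
      * exact (mteq_trans _ _ _ HA HAB).
      * split; [apply ceq_cand; auto using ceq_refl | auto].
    + apply teq_sym, teq_TN in Hs1; subst s1.
      exists G1, TN; split; [eapply typ_counts; [apply ty_app_p; eauto | lia ..] |].
      split; [auto | constructor].
Qed.

Lemma subject_expansion_sub t p u :
  subject_expansion_for t -> subject_expansion_for u -> subject_expansion_for (Sub t p u).
Proof.
  intros IHt IHu k v Hs G' s' b e m f H.
  destruct Hs as [(t' & Hs & ->) | [_ Hs]]; [| destruct p as [| p1 p2]].
  - inversion H as [| | | | | | | G1' D ? ? ? ? A B bt et mt ft ep mp fp bu eu mu fu H1 Hp Hu HAB];
      subst.
    destruct (IHt _ _ Hs _ _ _ _ _ _ H1) as (G1 & s1 & H1' & HG1 & Hs1).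
    destruct (ptyp_ceq _ _ _ _ _ _ _ G1 0 Hp) as (A' & Hp' & HA);
      [intros; apply mteq_sym, HG1 |].
    exists (cand (cdrop (psize p) G1) D), s1.
    split; [eapply typ_counts; [econstructor; eauto | lia ..] |].
    + exact (mteq_trans _ _ _ (mteq_sym _ _ HA) HAB).
    + split; [apply ceq_cand; auto using ceq_cdrop, ceq_refl | auto].
  - destruct Hs as [-> ->].
    destruct (subject_expansion_e _ _ _ _ _ _ _ _ H) as (G & s & Ht & HG & Hs).
    exists G, s; auto.
  - destruct Hs as [[-> (L & u1 & u2 & -> & ->)] | (u' & Hs & ->)].
    + destruct (subject_expansion_m _ _ _ _ _ _ _ _ _ _ _ _ H) as (G & Ht & HG).
      exists G, s'; auto using teq_refl.
    + inversion H as [| | | | | | | G1 D' ? ? ? ? A B bt et mt ft ep mp fp bu eu mu fu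
        H1 Hp Hu HAB]; subst.
      destruct (ptyp_pair_single _ _ _ _ _ _ _ _ Hp) as (a & ->).
      apply mteq_single_l in HAB as (b0 & -> & Hab0); apply mtyp_single_inv in Hu.
      destruct (IHu _ _ Hs _ _ _ _ _ _ Hu) as (D & s2 & Hu' & HD & Hs2).
      exists (cand (cdrop (psize (PPair p1 p2)) G1) D), s'.
      split; [eapply typ_counts; [econstructor; [exact H1 | exact Hp | apply mtyp_single, Hu' |
        apply mteq_single; eapply teq_trans; [| apply teq_sym]; eauto] | lia ..] |].
      split; [apply ceq_cand; auto using ceq_refl | apply teq_refl].
Qed.

Lemma subject_expansion t : subject_expansion_for t.
Proof.
  induction t; try (intros k v Hs; contradiction);
    auto using subject_expansion_lam, subject_expansion_app, subject_expansion_sub.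
Qed.

(** * Tight typings of head normal forms *)

Definition irreducible (t : term) : Prop := forall k v, ~ hstep t k v.

Definition is_pair (t : term) : Prop := exists L u1 u2, t = plug L (Pair u1 u2).

Lemma irreducible_lam p t : irreducible (Lam p t) -> irreducible t.
Proof. intros H k v Hs; apply (H k (Lam p v)); simpl; eauto. Qed.

Lemma irreducible_app t u : irreducible (App t u) -> ~ is_abs t /\ irreducible t.
Proof.
  intro H; assert (Hna : ~ is_abs t).
  { intros (L & p & t0 & ->); apply (H KB (plug L (Sub t0 p (lift (nbL L) 0 u)))).
    simpl; left; split; [reflexivity | eauto]. }
  split; [exact Hna |]; intros k v Hs; apply (H k (App v u)); simpl; eauto.
Qed.

Lemma irreducible_sub t p u : irreducible (Sub t p u) ->
  irreducible t /\ exists p1 p2, p = PPair p1 p2 /\ ~ is_pair u /\ irreducible u.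
Proof.
  intro H; assert (Ht : irreducible t).
  { intros k v Hs; apply (H k (Sub v p u)); simpl; eauto. }
  split; [exact Ht |]; destruct p as [| p1 p2].
  - exfalso; apply (H KE (subst 0 u t)); simpl; auto.
  - exists p1, p2; split; [reflexivity |]; split.
    + intros (L & u1 & u2 & ->); eapply (H KM); simpl; right; split; [exact Ht |].
      left; split; [reflexivity |]; eauto.
    + intros k v Hs; apply (H k (Sub t (PPair p1 p2) v)); simpl; right; split; eauto.
Qed.

Lemma not_abs_var x : ~ is_abs (Var x).
Proof. intros ([| L q w] & p & t & H); discriminate. Qed.

Lemma not_pair_var x : ~ is_pair (Var x).
Proof. intros ([| L q w] & u1 & u2 & H); discriminate. Qed.

Lemma not_abs_app t u : ~ is_abs (App t u).
Proof. intros ([| L q w] & p & t' & H); discriminate. Qed.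

Lemma not_pair_app t u : ~ is_pair (App t u).
Proof. intros ([| L q w] & u1 & u2 & H); discriminate. Qed.

Lemma not_abs_sub t p u : ~ is_abs (Sub t p u) -> ~ is_abs t.
Proof. intros H (L & q & t0 & ->); apply H; exists (LSub L p u), q, t0; reflexivity. Qed.

Lemma not_pair_sub t p u : ~ is_pair (Sub t p u) -> ~ is_pair t.
Proof. intros H (L & u1 & u2 & ->); apply H; exists (LSub L p u), u1, u2; reflexivity. Qed.

Lemma tight_prod A B : ~ tight (TProd A B).
Proof. intros [H | H]; discriminate. Qed.

Lemma tight_arr A s : ~ tight (TArr A s).
Proof. intros [H | H]; discriminate. Qed.

(* In a tight context, a typable stuck explicit matching [t[<p1,p2>/u]] can only
   be typed through (pat_p): its argument [u] is a neutral term of type [bullet_N]. *)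
Lemma tight_typ_match_inv t p1 p2 u G s b e m f :
  (forall D s b e m f, ~ is_abs u -> tight_ctx D -> typ D u s b e m f ->
     tight s /\ canN u f /\ b = 0 /\ e = 0 /\ m = 0) ->
  tight_ctx G -> typ G (Sub t (PPair p1 p2) u) s b e m f ->
  exists G1 f1 k, tight_ctx G1 /\ typ G1 t s b e m f1 /\ canN u k /\ f = f1 + k + 1.
Proof.
  intros Hu_neutral HG H.
  inversion H as [| | | | | | | G1 D ? ? ? ? A B bt et mt ft ep mp fp bu eu mu fu H1 Hp Hu HAB];
    subst; apply tight_cand in HG as [HG1 HD].
  inversion Hp as [| ? ? ? ? A1 A2 ep1 mp1 fp1 ep2 mp2 fp2 Hp1 Hp2 | ? ? ? ? Htight]; subst;
    apply mteq_single_l in HAB as (b0 & -> & Hb0); apply mtyp_single_inv in Hu;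
    (assert (Hna : ~ is_abs u);
     [intros (L & q & t0 & ->); apply typ_plug_lam_shape in Hu as [-> | (? & ? & ->)];
      inversion Hb0 |]);
    destruct (Hu_neutral _ _ _ _ _ _ Hna HD Hu) as (Hb0t & Hcan & -> & -> & ->).
  - destruct (teq_prod_inv _ _ _ Hb0) as (? & ? & ->); contradiction (tight_prod _ _ Hb0t).
  - exists G1, ft, fu; split; [apply (tight_cdrop _ _ HG1); intros; apply Htight; lia |].
    split; [eapply typ_counts; [exact H1 | lia ..] | split; [exact Hcan | lia]].
Qed.

Lemma tight_typ_neutral t : irreducible t -> ~ is_abs t -> ~ is_pair t ->
  forall G s b e m f, tight_ctx G -> typ G t s b e m f ->
  tight s /\ canN t f /\ b = 0 /\ e = 0 /\ m = 0.
Proof.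
  induction t as [x | p t IHt | t1 IHt1 t2 IHt2 | t1 IHt1 t2 IHt2 | t1 IHt1 p t2 IHt2];
    intros Hirr Hna Hnp G s b e m f HG H.
  - inversion H; subst; specialize (HG x); unfold csingle in HG; rewrite Nat.eqb_refl in HG.
    inversion HG; repeat split; auto; constructor.
  - exfalso; apply Hna; exists Hole, p, t; reflexivity.
  - exfalso; apply Hnp; exists Hole, t1, t2; reflexivity.
  - apply irreducible_app in Hirr as [Hna1 Hirr1].
    assert (Hnp1 : ~ is_pair t1).
    { intros (L & u1 & u2 & ->); inversion H as [| | | ? ? ? ? ? ? ? ? ? ? ? ? ? ? ? H1 |
        ? ? ? ? ? ? ? H1 | | |]; subst;
        apply typ_plug_pair_shape in H1 as [? | (? & ? & ?)]; discriminate. }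
    inversion H as [| | | G1 D ? ? A B ? bt et mt ft bu eu mu fu H1 Hu HAB |
      G1 ? ? ? ? ? ? H1 | | |]; subst.
    + apply tight_cand in HG as [HG1 _].
      destruct (IHt1 Hirr1 Hna1 Hnp1 _ _ _ _ _ _ HG1 H1) as [Harr _].
      contradiction (tight_arr _ _ Harr).
    + destruct (IHt1 Hirr1 Hna1 Hnp1 _ _ _ _ _ _ HG H1) as (Hs & Hcan & -> & -> & ->).
      repeat split; auto; constructor; auto.
  - apply irreducible_sub in Hirr as [Hirr1 (p1 & p2 & -> & Hnp2 & Hirr2)].
    destruct (tight_typ_match_inv _ _ _ _ _ _ _ _ _ _ (fun D s b e m f Hna2 =>
      IHt2 Hirr2 Hna2 Hnp2 D s b e m f) HG H) as (G1 & f1 & k & HG1 & H1 & Hcan2 & ->).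
    destruct (IHt1 Hirr1 (not_abs_sub _ _ _ Hna) (not_pair_sub _ _ _ Hnp) _ _ _ _ _ _ HG1 H1)
      as (Hs & Hcan1 & -> & -> & ->).
    repeat split; auto; constructor; auto.
Qed.

Lemma tight_typ_canonical t : irreducible t ->
  forall G s b e m f, tight_ctx G -> tight s -> typ G t s b e m f ->
  canM t f /\ b = 0 /\ e = 0 /\ m = 0.
Proof.
  induction t as [x | p t IHt | t1 IHt1 t2 IHt2 | t1 IHt1 t2 IHt2 | t1 IHt1 p t2 IHt2];
    intros Hirr G s b e m f HG Hs H.
  - destruct (tight_typ_neutral _ Hirr (not_abs_var x) (not_pair_var x) _ _ _ _ _ _ HG H)
      as (_ & Hcan & -> & -> & ->).
    repeat split; constructor; auto.
  - apply irreducible_lam in Hirr.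
    inversion H as [| | G1 ? ? s1 ? ? ? ? Ht Hs1 Hp | | | | |]; subst;
      [contradiction (tight_arr _ _ Hs) |].
    destruct (IHt Hirr _ _ _ _ _ _ (tight_cdrop _ _ HG Hp) Hs1 Ht) as (Hcan & -> & -> & ->).
    repeat split; constructor; auto.
  - inversion H; subst; [contradiction (tight_prod _ _ Hs) |].
    repeat split; constructor.
  - destruct (tight_typ_neutral _ Hirr (not_abs_app _ _) (not_pair_app _ _) _ _ _ _ _ _ HG H)
      as (_ & Hcan & -> & -> & ->).
    repeat split; constructor; auto.
  - apply irreducible_sub in Hirr as [Hirr1 (p1 & p2 & -> & Hnp2 & Hirr2)].
    destruct (tight_typ_match_inv _ _ _ _ _ _ _ _ _ _ (fun D s b e m f Hna2 =>
      tight_typ_neutral _ Hirr2 Hna2 Hnp2 D s b e m f) HG H)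
      as (G1 & f1 & k & HG1 & H1 & Hcan2 & ->).
    destruct (IHt1 Hirr1 _ _ _ _ _ _ HG1 Hs H1) as (Hcan1 & -> & -> & ->).
    repeat split; econstructor; eauto.
Qed.

Lemma canN_tight_typ t n : canN t n -> exists G, tight_ctx G /\ typ G t TN 0 0 0 n.
Proof.
  induction 1 as [x | t u n _ (G & HG & Ht) | t p1 p2 u n k _ (G & HG & Ht) _ (D & HD & Hu)].
  - exists (csingle x [TN]); split; [| constructor].
    intro y; unfold csingle; destruct (y =? x); repeat constructor.
  - exists G; split; [exact HG | eapply typ_counts; [apply ty_app_p; eauto | lia ..]].
  - exists (cand (cdrop (psize (PPair p1 p2)) G) D); split; [apply tight_cand; split; [intro; apply HG | exact HD] |].
    eapply typ_counts; [econstructor; [exact Ht | apply pt_p; intros; apply HG |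
      apply mtyp_single, Hu | apply mteq_refl] | lia ..].
Qed.

Lemma canM_tight_typ t n : canM t n ->
  exists G s, tight_ctx G /\ tight s /\ typ G t s 0 0 0 n.
Proof.
  induction 1 as [p t n _ (G & s & HG & Hs & Ht) | t u | t p1 p2 u n k _ (G & s & HG & Hs & Ht) Hu |
    t n Ht].
  - exists (cdrop (psize p) G), TM; split; [intro; apply HG |]; split; [right; auto |].
    eapply ty_abs_p; eauto.
  - exists cempty, TM; split; [apply tight_cempty |]; split; [right; auto | constructor].
  - destruct (canN_tight_typ _ _ Hu) as (D & HD & Hu').
    exists (cand (cdrop (psize (PPair p1 p2)) G) D), s; split; [apply tight_cand; split; [intro; apply HG | exact HD] |].
    split; [exact Hs |].
    eapply typ_counts; [econstructor; [exact Ht | apply pt_p; intros; apply HG |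
      apply mtyp_single, Hu' | apply mteq_refl] | lia ..].
  - destruct (canN_tight_typ _ _ Ht) as (G & HG & Ht').
    exists G, TN; split; [exact HG |]; split; [left; auto | exact Ht'].
Qed.

Lemma tight_typ_hreds n : forall t G s b e m f, b + e + m < n ->
  tight_ctx G -> tight s -> typ G t s b e m f ->
  exists u, hreds t b e m u /\ canM u f.
Proof.
  induction n as [| n IHn]; intros t G s b e m f Hn HG Hs H; [lia |].
  destruct (classic (exists k v, hstep t k v)) as [(k & v & Hstep) | Hirr].
  - destruct (subject_reduction _ _ _ Hstep _ _ _ _ _ _ H)
      as (G' & s' & b' & e' & m' & H' & HG' & Hs' & -> & -> & ->).
    destruct (IHn v G' s' b' e' m' f) as (u & Hred & Hcan);
      [destruct k; simpl in Hn; lia | eapply ceq_tight; eauto | eapply teq_tight; eauto | auto |].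
    exists u; split; [econstructor; eauto | exact Hcan].
  - assert (Hirr' : irreducible t) by (intros k v Hstep; apply Hirr; eauto).
    destruct (tight_typ_canonical _ Hirr' _ _ _ _ _ _ HG Hs H) as (Hcan & -> & -> & ->).
    exists t; split; [constructor | exact Hcan].
Qed.

Lemma hreds_tight_typ t b e m u s : hreds t b e m u -> canM u s ->
  exists G tau, tight_ctx G /\ tight tau /\ typ G t tau b e m s.
Proof.
  induction 1 as [t | t k t' b e m u Hstep _ IH]; intro Hcan.
  - destruct (canM_tight_typ _ _ Hcan) as (G & tau & HG & Htau & Ht); eauto.
  - destruct (IH Hcan) as (G' & tau & HG' & Htau & Ht').
    destruct (subject_expansion _ _ _ Hstep _ _ _ _ _ _ Ht') as (G & sigma & Ht & HG & Hsigma).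
    exists G, sigma; split; [eapply ceq_tight; [apply ceq_sym |]; eauto |].
    split; [eapply teq_tight; [apply teq_sym |]; eauto | exact Ht].
Qed.

Theorem corollary1 (t : term) (b e m s : nat) :
  (exists (G : ctx) (tau : ty),
      tight_ctx G /\ tight tau /\ typ G t tau b e m s)
  <->
  (exists u : term, hreds t b e m u /\ canM u s).
Proof.
  split.
  - intros (G & tau & HG & Htau & Ht); eapply (tight_typ_hreds (S (b + e + m))); eauto.
  - intros (u & Hred & Hcan); eapply hreds_tight_typ; eauto.
Qed.
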